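(* Consider the heterogeneous cone percolation process on $\mathbb{T}_d^+$. If for some positive integer $n$ $$\liminf_{j\to\infty}\ d^n\prod_{k=0}^{n-1}\Big[1-\prod_{i=0}^{k}\mathbb{P}[R_{jn+i}<k+1-i]\Big] > 1,$$ then with positive probability the set $I$ of vertices reached from $\mathcal{O}$ is infinite (the process has a giant component with positive probability).
   Context: Let $d\ge2$, let $\mathbb{T}_d$ be the infinite tree in which every vertex has $d+1$ neighbours, with a fixed origin $\mathcal{O}$; $d(u,v)$ is graph distance and $u\le v$ means $u$ lies on the path from $\mathcal{O}$ to $v$. Fix a neighbour $w$ of $\mathcal{O}$ and let $\mathbb{T}_d^+$ be the subtree obtained by deleting all $x$ with $w\le x$; every vertex of $\mathbb{T}_d^+$ has exactly $d$ children. Heterogeneous cone percolation on $\mathbb{T}_d^+$: let $(R_z)_{z\in\mathbb{N}}$ be independent random variables with values in $\{0,1,2,\dots\}$ and $\mathbb{P}[R_z=0]<1$ for all $z$; let $(\bar R_u)_{u\in\mathbb{T}_d^+}$ be independent random variables with $\bar R_u$ distributed as $R_{d(\mathcal{O},u)}$. Let $B_u=\{v\in\mathbb{T}_d^+: u\le v,\ d(u,v)\le \bar R_u\}$, $I_0=\{\mathcal{O}\}$, $I_{m+1}=\bigcup_{x\in I_m}B_x$, $I=\bigcup_{m\ge0}I_m$. *)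

From Stdlib Require Import Reals List Arith.
Import ListNotations.
Open Scope R_scope.

(* Vertices of T_d^+ : finite words over {0,...,d-1}; [] is the origin O.
   The children of u are u ++ [i], i < d.  d(O,u) = length u. *)
Definition valid (d : nat) (u : list nat) : Prop := Forall (fun i => (i < d)%nat) u.

Definition prefix (u v : list nat) : Prop := exists w, v = u ++ w.

Record is_prob_space {Omega : Type} (F : (Omega -> Prop) -> Prop)
    (P : (Omega -> Prop) -> R) : Prop := {
  ps_full : F (fun _ => True);
  ps_compl : forall A, F A -> F (fun w => ~ A w);
  ps_union : forall A : nat -> Omega -> Prop,
      (forall n, F (A n)) -> F (fun w => exists n, A n w);
  ps_nonneg : forall A, F A -> 0 <= P A;
  ps_total : P (fun _ => True) = 1;
  ps_additive : forall A : nat -> Omega -> Prop,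
      (forall n, F (A n)) ->
      (forall m n, m <> n -> forall w, A m w -> A n w -> False) ->
      infinite_sum (fun n => P (A n)) (P (fun w => exists n, A n w))
}.

Definition nat_rv {Omega : Type} (F : (Omega -> Prop) -> Prop) (X : Omega -> nat) : Prop :=
  forall k, F (fun w => X w = k).

Definition prodR (l : list R) : R := fold_right Rmult 1 l.

Definition independent {Omega I : Type} (P : (Omega -> Prop) -> R)
    (J : I -> Prop) (X : I -> Omega -> nat) : Prop :=
  forall (l : list I) (f : I -> nat), NoDup l -> Forall J l ->
    P (fun w => Forall (fun i => X i w = f i) l)
    = prodR (map (fun i => P (fun w => X i w = f i)) l).

(* The set I of vertices reached from O, given the realised radii Rb:
   I_0 = {O}, I_{m+1} = union of B_x, x in I_m, where
   B_x = { v : x <= v, d(x,v) <= Rb x }.  I = union of the I_m. *)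
Inductive reached (d : nat) (Rb : list nat -> nat) : list nat -> Prop :=
| reached_root : reached d Rb []
| reached_step : forall x v, reached d Rb x -> valid d v -> prefix x v ->
    (length v - length x <= Rb x)%nat -> reached d Rb v.

Definition infinite_set (S : list nat -> Prop) : Prop :=
  forall l : list (list nat), exists v, S v /\ ~ In v l.

Definition cone_quantity {Omega : Type} (P : (Omega -> Prop) -> R)
    (R_ : nat -> Omega -> nat) (d n j : nat) : R :=
  INR d ^ n *
  prodR (map (fun k =>
     1 - prodR (map (fun i => P (fun w => (R_ (j * n + i)%nat w < S k - i)%nat))
                    (seq 0 (S k))))
   (seq 0 n)).

(** Cut the tree into blocks of [n] generations and truncate every radius at
    [n]: an event about finitely many vertices then lives on a product of
    finitely many coordinates with values in [{0, ..., n}]. Along a block path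
    [w] of length [n] below [v], the [k]-th vertex is covered when one of the
    vertices before it on the path has a large enough radius. These covering
    events are increasing, so by Harris' inequality the block is crossed with
    probability at least the product in the hypothesis, and the expected number
    of crossed blocks below a deep vertex is at least [c > 1]. Given the radii in
    the first block, the subtrees below distinct block paths are independent,
    and [prod (1 - x_i) <= 1 - sum x_i + (sum x_i)^2] turns this into a uniform
    lower bound [eps] on the probability of [m] successive crossed blocks below
    any deep vertex. A finite path of positive radii from the origin,
    independent of the subtree below its end, completes the argument. *)

From Stdlib Require Import Reals List Arith Lia Lra Permutation.
From Stdlib Require Import FunctionalExtensionality PropExtensionality ClassicalEpsilon Classical.
Import ListNotations.
Open Scope R_scope.

Definition sumR (l : list R) : R := fold_right Rplus 0 l.

Section ListSums.
Context {I : Type}.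

Lemma sumR_app (l1 l2 : list R) : sumR (l1 ++ l2) = sumR l1 + sumR l2.
Proof. induction l1; simpl; [ring | rewrite IHl1; ring]. Qed.

Lemma sumR_map_ext (l : list I) (f g : I -> R) :
  (forall a, In a l -> f a = g a) -> sumR (map f l) = sumR (map g l).
Proof. intros H; f_equal; apply map_ext_in; auto. Qed.

Lemma sumR_map_le (l : list I) (f g : I -> R) :
  (forall a, In a l -> f a <= g a) -> sumR (map f l) <= sumR (map g l).
Proof.
  induction l as [|a l IH]; simpl; intros H; [lra|].
  pose proof (H a (or_introl eq_refl)). pose proof (IH (fun x Hx => H x (or_intror Hx))). lra.
Qed.

Lemma sumR_map_nonneg (l : list I) (f : I -> R) :
  (forall a, In a l -> 0 <= f a) -> 0 <= sumR (map f l).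
Proof.
  induction l as [|a l IH]; simpl; intros H; [lra|].
  pose proof (H a (or_introl eq_refl)). pose proof (IH (fun x Hx => H x (or_intror Hx))). lra.
Qed.

Lemma sumR_map_scal (l : list I) (c : R) (f : I -> R) :
  sumR (map (fun a => c * f a) l) = c * sumR (map f l).
Proof. induction l; simpl; [ring | rewrite IHl; ring]. Qed.

Lemma sumR_map_plus (l : list I) (f g : I -> R) :
  sumR (map (fun a => f a + g a) l) = sumR (map f l) + sumR (map g l).
Proof. induction l; simpl; [ring | rewrite IHl; ring]. Qed.

Lemma sumR_map_const (l : list I) (c : R) : sumR (map (fun _ => c) l) = INR (length l) * c.
Proof. induction l; simpl length; [simpl; ring|]. rewrite S_INR. simpl. rewrite IHl. ring. Qed.

Lemma prodR_map_nonneg (l : list I) (f : I -> R) :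
  (forall a, In a l -> 0 <= f a) -> 0 <= prodR (map f l).
Proof. induction l; simpl; intros H; [lra|]. apply Rmult_le_pos; auto with datatypes. Qed.

Lemma prodR_map_pos (l : list I) (f : I -> R) :
  (forall a, In a l -> 0 < f a) -> 0 < prodR (map f l).
Proof. induction l; simpl; intros H; [lra|]. apply Rmult_lt_0_compat; auto with datatypes. Qed.

Lemma prodR_map_le (l : list I) (f g : I -> R) :
  (forall a, In a l -> 0 <= f a <= g a) -> prodR (map f l) <= prodR (map g l).
Proof.
  induction l as [|a l IH]; simpl; intros H; [lra|].
  destruct (H a (or_introl eq_refl)).
  apply Rmult_le_compat; try lra.
  - apply prodR_map_nonneg. intros x Hx. apply (H x (or_intror Hx)).
  - apply IH. auto with datatypes.
Qed.

Lemma prodR_one_minus_le (l : list I) (x : I -> R) :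
  (forall i, In i l -> 0 <= x i <= 1) ->
  prodR (map (fun i => 1 - x i) l) <= 1 - sumR (map x l) + sumR (map x l) ^ 2.
Proof.
  induction l as [|i l IH]; simpl; intros H; [lra|].
  assert (Hs : 0 <= sumR (map x l)) by (apply sumR_map_nonneg; intros a Ha; apply H; right; exact Ha).
  destruct (H i (or_introl eq_refl)).
  specialize (IH (fun j Hj => H j (or_intror Hj))).
  apply Rle_trans with ((1 - x i) * (1 - sumR (map x l) + sumR (map x l) ^ 2)).
  - apply Rmult_le_compat_l; lra.
  - nra.
Qed.

End ListSums.

Lemma prodR_perm (l l' : list R) : Permutation l l' -> prodR l = prodR l'.
Proof. induction 1; simpl; try congruence; ring. Qed.

Lemma sum_f_R0_seq (f : nat -> R) (m : nat) : sum_f_R0 f m = sumR (map f (seq 0 (S m))).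
Proof.
  induction m; [simpl; ring|].
  rewrite seq_S, map_app, sumR_app, <- IHm. simpl. ring.
Qed.

Lemma sumR_seq_last (f : nat -> R) (N : nat) :
  sumR (map f (seq 0 (S N))) = sumR (map f (seq 0 N)) + f N.
Proof. rewrite seq_S, map_app, sumR_app. simpl. ring. Qed.

Lemma sumR_seq_vanishing_tail (f : nat -> R) (N K : nat) :
  (N <= K)%nat -> (forall i, (N <= i)%nat -> f i = 0) ->
  sumR (map f (seq 0 K)) = sumR (map f (seq 0 N)).
Proof.
  intros H Hz. induction H; [reflexivity|].
  rewrite seq_S, map_app, sumR_app, IHle. simpl. rewrite Hz by lia. ring.
Qed.

Lemma chebyshev_sum (l : list nat) (p f g : nat -> R) :
  (forall a, In a l -> 0 <= p a) -> sumR (map p l) = 1 ->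
  (forall a b, (a <= b)%nat -> f a <= f b) -> (forall a b, (a <= b)%nat -> g a <= g b) ->
  sumR (map (fun a => p a * f a) l) * sumR (map (fun a => p a * g a) l)
  <= sumR (map (fun a => p a * (f a * g a)) l).
Proof.
  intros Hp Hs Hf Hg.
  set (A := sumR (map (fun a => p a * f a) l)).
  set (B := sumR (map (fun a => p a * g a) l)).
  set (C := sumR (map (fun a => p a * (f a * g a)) l)).
  assert (Hnn : 0 <= sumR (map (fun a => p a *
                 sumR (map (fun b => p b * ((f a - f b) * (g a - g b))) l)) l)).
  { apply sumR_map_nonneg. intros a Ha. apply Rmult_le_pos; auto.
    apply sumR_map_nonneg. intros b Hb. apply Rmult_le_pos; auto.
    destruct (Nat.le_ge_cases a b) as [H|H];
      pose proof (Hf _ _ H); pose proof (Hg _ _ H); nra. }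
  assert (Hexpand : forall (u v : R) (l' : list nat),
    sumR (map (fun b => p b * ((u - f b) * (v - g b))) l')
    = u * v * sumR (map p l') - u * sumR (map (fun b => p b * g b) l')
      - v * sumR (map (fun b => p b * f b) l') + sumR (map (fun b => p b * (f b * g b)) l')).
  { intros u v l'. induction l'; simpl; [ring | rewrite IHl'; ring]. }
  erewrite map_ext in Hnn by (intro a; rewrite Hexpand; reflexivity).
  rewrite Hs in Hnn. fold A B C in Hnn.
  assert (Houter : forall l' : list nat,
    sumR (map (fun a => p a * (f a * g a * 1 - f a * B - g a * A + C)) l')
    = sumR (map (fun a => p a * (f a * g a)) l') - B * sumR (map (fun a => p a * f a) l')
      - A * sumR (map (fun a => p a * g a) l') + C * sumR (map p l')).
  { intro l'. induction l'; simpl; [ring | rewrite IHl'; ring]. }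
  rewrite Houter, Hs in Hnn. fold A B C in Hnn. nra.
Qed.

Lemma small_eps_exists (c K : R) : 1 < c -> 0 <= K -> exists eps, 0 < eps <= 1 /\ eps * K <= c - 1.
Proof.
  intros Hc HK0. set (K' := c - 1 + K). assert (HK : 0 < K') by (unfold K'; lra).
  assert (HKK : K' * / K' = 1) by (apply Rinv_r; lra).
  exists ((c - 1) / K'). split; [split|].
  - apply Rdiv_lt_0_compat; lra.
  - apply Rmult_le_reg_r with K'; auto. unfold Rdiv. rewrite Rmult_assoc, (Rmult_comm (/ K')), HKK.
    unfold K'. lra.
  - apply Rmult_le_reg_r with K'; auto. unfold Rdiv.
    replace ((c - 1) * / K' * K * K') with ((c - 1) * K * (K' * / K')) by ring.
    rewrite HKK. unfold K'. nra.
Qed.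

Lemma NoDup_flat_map_disjoint {A B : Type} (f : A -> list B) (l : list A) :
  NoDup l -> (forall a, In a l -> NoDup (f a)) ->
  (forall a b x, In a l -> In b l -> a <> b -> In x (f a) -> In x (f b) -> False) ->
  NoDup (flat_map f l).
Proof.
  induction l as [|a l IH]; simpl; intros HN Hf Hd; [constructor|].
  inversion HN; subst. apply NoDup_app.
  - apply Hf; simpl; auto.
  - apply IH; auto. intros a0 b x K1 K2 K3; apply Hd; simpl; auto.
  - intros x Hx Hx2. apply in_flat_map in Hx2. destruct Hx2 as [b [Hb Hxb]].
    apply (Hd a b x); simpl; auto. intro; subst; contradiction.
Qed.

Lemma app_inv_same_length {A : Type} (w w' x x' : list A) :
  length w = length w' -> w ++ x = w' ++ x' -> w = w'.
Proof.
  intros Hl E.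
  assert (Hpre : forall u y : list A, firstn (length u) (u ++ y) = u)
    by (intros; rewrite firstn_app, Nat.sub_diag, firstn_all; simpl; apply app_nil_r).
  rewrite <- (Hpre w x), <- (Hpre w' x'), Hl, E. reflexivity.
Qed.

Lemma concat_map_singleton {A B : Type} (f : A -> B) (l : list A) :
  concat (map (fun i => [f i]) l) = map f l.
Proof. induction l; simpl; auto. rewrite IHl; auto. Qed.

Lemma NoDup_map_injective {A B : Type} (f : A -> B) (l : list A) :
  NoDup (map f l) -> forall x y, In x l -> In y l -> f x = f y -> x = y.
Proof.
  induction l as [|a l IH]; simpl; intros HN x y Hx Hy E; [contradiction|].
  inversion HN as [|? ? Hn HN']; subst.
  destruct Hx as [<-|Hx], Hy as [<-|Hy]; auto; exfalso; apply Hn; [rewrite E | rewrite <- E];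
    apply in_map; auto.
Qed.

Lemma event_ext {Omega : Type} (A B : Omega -> Prop) : (forall w, A w <-> B w) -> A = B.
Proof. intros H. apply functional_extensionality; intro w. apply propositional_extensionality, H. Qed.

Section ProbabilitySpace.
Context {Omega : Type} (F : (Omega -> Prop) -> Prop) (P : (Omega -> Prop) -> R)
  (hP : is_prob_space F P).

Lemma P_ext (A B : Omega -> Prop) : (forall w, A w <-> B w) -> P A = P B.
Proof. intros H; rewrite (event_ext A B H); reflexivity. Qed.

Lemma F_ext (A B : Omega -> Prop) : (forall w, A w <-> B w) -> F A -> F B.
Proof. intros H; rewrite (event_ext A B H); auto. Qed.

Lemma F_full : F (fun _ => True).
Proof. apply (ps_full _ _ hP). Qed.

Lemma F_not (A : Omega -> Prop) : F A -> F (fun w => ~ A w).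
Proof. apply (ps_compl _ _ hP). Qed.

Lemma F_exists (A : nat -> Omega -> Prop) : (forall n, F (A n)) -> F (fun w => exists n, A n w).
Proof. apply (ps_union _ _ hP). Qed.

Lemma F_empty : F (fun _ => False).
Proof. eapply F_ext; [|apply F_not, F_full]. simpl. tauto. Qed.

Lemma F_const (Q : Prop) : F (fun _ => Q).
Proof.
  destruct (classic Q) as [HQ|HQ]; [eapply F_ext; [|apply F_full] | eapply F_ext; [|apply F_empty]];
    simpl; tauto.
Qed.

Lemma F_or (A B : Omega -> Prop) : F A -> F B -> F (fun w => A w \/ B w).
Proof.
  intros HA HB.
  apply F_ext with (fun w => exists k : nat, if Nat.eq_dec k 0 then A w else B w).
  - intro w. split.
    + intros [k Hk]. destruct (Nat.eq_dec k 0); auto.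
    + intros [H|H]; [exists 0%nat | exists 1%nat]; simpl; auto.
  - apply F_exists. intro k. destruct (Nat.eq_dec k 0); auto.
Qed.

Lemma F_and (A B : Omega -> Prop) : F A -> F B -> F (fun w => A w /\ B w).
Proof.
  intros HA HB. apply F_ext with (fun w => ~ (~ A w \/ ~ B w)); [intro w; tauto|].
  apply F_not, F_or; apply F_not; assumption.
Qed.

Lemma F_forall (A : nat -> Omega -> Prop) : (forall n, F (A n)) -> F (fun w => forall n, A n w).
Proof.
  intros H. apply F_ext with (fun w => ~ exists n, ~ A n w).
  - intro w. split; [intros Hn n; apply NNPP; intro Hc; apply Hn; eauto | intros Hn [n Hc]; auto].
  - apply F_not, F_exists. intro n. apply F_not, H.
Qed.

Lemma F_exists_in {I : Type} (l : list I) (B : I -> Omega -> Prop) :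
  (forall a, In a l -> F (B a)) -> F (fun w => exists a, In a l /\ B a w).
Proof.
  induction l as [|a l IH]; intros H.
  - apply F_ext with (fun _ => False); [|apply F_empty]. intro; split; [tauto|]. intros [? [[] _]].
  - apply F_ext with (fun w => B a w \/ exists a', In a' l /\ B a' w).
    + intro w. split.
      * intros [H1|[a' [H1 H2]]]; [exists a | exists a']; simpl; auto.
      * intros [a' [[<-|H1] H2]]; [left | right; exists a']; auto.
    + apply F_or; [apply H; simpl; auto | apply IH; intros; apply H; simpl; auto].
Qed.

Lemma P_nonneg (A : Omega -> Prop) : F A -> 0 <= P A.
Proof. apply (ps_nonneg _ _ hP). Qed.

Lemma P_empty : P (fun _ => False) = 0.
Proof.
  pose proof (ps_additive _ _ hP (fun _ _ => False) (fun _ => F_empty)) as H.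
  specialize (H ltac:(tauto)). simpl in H.
  rewrite (P_ext (fun w => exists _ : nat, False) (fun _ => False)) in H
    by (intro; split; [intros [_ x]; exact x | tauto]).
  set (c := P (fun _ => False)) in *.
  destruct (Req_dec c 0) as [E|E]; auto. exfalso.
  destruct (H (Rabs c)) as [N HN]; [apply Rabs_pos_lt; auto|].
  specialize (HN (S N) ltac:(lia)).
  rewrite sum_f_R0_seq, sumR_map_const, length_seq in HN. unfold Rdist in HN.
  replace (INR (S (S N)) * c - c) with (INR (S N) * c) in HN by (rewrite (S_INR (S N)); ring).
  rewrite Rabs_mult, Rabs_pos_eq in HN by apply pos_INR.
  assert (1 <= INR (S N)) by (rewrite S_INR; pose proof (pos_INR N); lra).
  pose proof (Rabs_pos c). nra.
Qed.

Lemma P_disjoint_union (N : nat) (A : nat -> Omega -> Prop) :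
  (forall i, (i < N)%nat -> F (A i)) ->
  (forall i j, (i < N)%nat -> (j < N)%nat -> i <> j -> forall w, A i w -> A j w -> False) ->
  P (fun w => exists i, (i < N)%nat /\ A i w) = sumR (map (fun i => P (A i)) (seq 0 N)).
Proof.
  intros HF HD.
  set (B := fun i w => (i < N)%nat /\ A i w).
  assert (HB : forall n, F (B n)).
  { intro n. unfold B. destruct (lt_dec n N).
    - eapply F_ext; [|apply (HF n l)]. simpl. tauto.
    - eapply F_ext; [|apply F_empty]. simpl. tauto. }
  assert (HBd : forall m n, m <> n -> forall w, B m w -> B n w -> False)
    by (unfold B; intros m n Hmn w [Hm Am] [Hn An]; eauto).
  pose proof (ps_additive _ _ hP B HB HBd) as H.
  assert (Hz : forall i, (N <= i)%nat -> P (B i) = 0).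
  { intros i Hi. rewrite <- P_empty. apply P_ext. unfold B; intro; split; [lia | tauto]. }
  assert (Hfin : infinite_sum (fun i => P (B i)) (sumR (map (fun i => P (B i)) (seq 0 N)))).
  { intros eps Heps. exists N. intros m Hm. rewrite sum_f_R0_seq.
    rewrite (sumR_seq_vanishing_tail _ N (S m)) by (auto; lia). unfold Rdist.
    rewrite Rminus_diag, Rabs_R0. lra. }
  change (fun w => exists i, (i < N)%nat /\ A i w) with (fun w => exists i, B i w).
  rewrite (uniqueness_sum _ _ _ H Hfin).
  apply sumR_map_ext. intros i Hi. apply in_seq in Hi.
  apply P_ext. unfold B. intro; split; [tauto | intros; split; [lia | auto]].
Qed.

Lemma P_split (A B : Omega -> Prop) : F A -> F B ->
  P A = P (fun w => A w /\ B w) + P (fun w => A w /\ ~ B w).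
Proof.
  intros HA HB.
  set (C := fun i w => if Nat.eq_dec i 0 then A w /\ B w else A w /\ ~ B w).
  rewrite (P_ext A (fun w => exists i, (i < 2)%nat /\ C i w)).
  - rewrite P_disjoint_union; unfold C.
    + simpl. ring.
    + intros i Hi. destruct (Nat.eq_dec i 0); auto using F_and, F_not.
    + intros i j Hi Hj Hij w. destruct (Nat.eq_dec i 0), (Nat.eq_dec j 0); try lia; tauto.
  - intro w; unfold C; split.
    + intros Hw. destruct (classic (B w)); [exists 0%nat | exists 1%nat]; simpl; split; auto; lia.
    + intros [i [Hi Hw]]. destruct (Nat.eq_dec i 0); tauto.
Qed.

Lemma P_compl (A : Omega -> Prop) : F A -> P (fun w => ~ A w) = 1 - P A.
Proof.
  intros HA. rewrite <- (ps_total _ _ hP), (P_split (fun _ => True) A F_full HA).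
  rewrite (P_ext (fun w => True /\ A w) A), (P_ext (fun w => True /\ ~ A w) (fun w => ~ A w));
    [ring | intro; tauto | intro; tauto].
Qed.

Lemma P_mono (A B : Omega -> Prop) : F A -> F B -> (forall w, A w -> B w) -> P A <= P B.
Proof.
  intros HA HB Hs. rewrite (P_split B A HB HA).
  rewrite (P_ext (fun w => B w /\ A w) A) by (intro; split; [tauto | auto]).
  pose proof (P_nonneg _ (F_and _ _ HB (F_not _ HA))). lra.
Qed.

Lemma P_decreasing_inter_ge (A : nat -> Omega -> Prop) (delta : R) :
  (forall m, F (A m)) -> (forall m w, A (S m) w -> A m w) -> (forall m, delta <= P (A m)) ->
  delta <= P (fun w => forall m, A m w).
Proof.
  intros HF Hdec Hd.
  assert (Hdec' : forall m k w, (k <= m)%nat -> A m w -> A k w)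
    by (intros m k w Hkm; induction Hkm; auto).
  (* [~ A m] increases to [~ forall m, A m]; the [G m] are its disjoint increments. *)
  set (G := fun m w => match m with 0 => ~ A 0%nat w | S k => A k w /\ ~ A (S k) w end).
  assert (HG : forall m, F (G m))
    by (intros [|m]; simpl; [apply F_not; auto | apply F_and; auto; apply F_not; auto]).
  assert (HGn : forall m w, G m w -> ~ A m w) by (intros [|m] w; simpl; tauto).
  assert (HGd : forall m m', m <> m' -> forall w, G m w -> G m' w -> False).
  { intros m m' Hne w H1 H2.
    destruct (Nat.lt_ge_cases m m') as [Hl|Hl].
    - destruct m' as [|k]; [lia|]. apply (HGn m w H1), (Hdec' k); [lia | apply H2].
    - destruct m as [|k]; [lia|]. apply (HGn m' w H2), (Hdec' k); [lia | apply H1]. }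
  pose proof (ps_additive _ _ hP G HG HGd) as Hsum.
  assert (Hpart : forall N, sum_f_R0 (fun m => P (G m)) N = P (fun w => ~ A N w)).
  { induction N as [|N IH]; simpl; [reflexivity|]. rewrite IH.
    rewrite (P_split (fun w => ~ A (S N) w) (A N)) by auto using F_not.
    rewrite (P_ext (fun w => ~ A (S N) w /\ ~ A N w) (fun w => ~ A N w)),
      (P_ext (fun w => ~ A (S N) w /\ A N w) (G (S N))); [ring | intro w; simpl; tauto |].
    intro w. split; [tauto|]. intros H; split; auto. }
  set (l := P (fun w => exists m, G m w)) in *.
  assert (Hl : l <= 1 - delta).
  { destruct (Rle_dec l (1 - delta)) as [E|E]; auto. exfalso.
    destruct (Hsum (l - (1 - delta))) as [N HN]; [lra|].
    specialize (HN N (le_n N)). rewrite Hpart, (P_compl (A N) (HF N)) in HN. unfold Rdist in HN.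
    specialize (Hd N). apply Rabs_def2 in HN. lra. }
  rewrite (P_ext (fun w => forall m, A m w) (fun w => ~ exists m, G m w)).
  - rewrite P_compl by (apply F_exists; auto). fold l. lra.
  - intro w. split.
    + intros Hall [m Hm]. apply (HGn m w Hm), Hall.
    + intros Hno m. apply NNPP. intro Hc. apply Hno.
      induction m as [|m IH]; [exists 0%nat; simpl; auto|].
      destruct (classic (A m w)) as [Ha|Ha]; [exists (S m); simpl; tauto | apply IH; auto].
Qed.

End ProbabilitySpace.

Section TreeWords.
Variable d : nat.

Lemma valid_app (a b : list nat) : valid d a -> valid d b -> valid d (a ++ b).
Proof. intros; apply Forall_app; auto. Qed.

Lemma valid_firstn (i : nat) (w : list nat) : valid d w -> valid d (firstn i w).
Proof.
  unfold valid. rewrite !Forall_forall. intros H x Hx. apply H.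
  rewrite <- (firstn_skipn i w). apply in_or_app; auto.
Qed.

Lemma valid_skipn (i : nat) (w : list nat) : valid d w -> valid d (skipn i w).
Proof.
  unfold valid. rewrite !Forall_forall. intros H x Hx. apply H.
  rewrite <- (firstn_skipn i w). apply in_or_app; auto.
Qed.

Fixpoint words (L : nat) : list (list nat) :=
  match L with
  | 0 => [[]]
  | S L => flat_map (fun a => map (cons a) (words L)) (seq 0 d)
  end.

Lemma in_words (L : nat) (x : list nat) : In x (words L) <-> length x = L /\ valid d x.
Proof.
  unfold valid. revert x. induction L as [|L IH]; intros x; simpl.
  - split; [intros [<-|[]]; split; auto|]. intros [H _]. destruct x; [auto | discriminate].
  - rewrite in_flat_map. split.
    + intros [a [Ha Hx]]. apply in_map_iff in Hx. destruct Hx as [y [<- Hy]].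
      apply IH in Hy. destruct Hy. apply in_seq in Ha. simpl. split; [lia|]. constructor; auto. lia.
    + intros [Hl Hv]. destruct x as [|a y]; [discriminate|]. inversion Hv; subst.
      exists a. split; [apply in_seq; lia|]. apply in_map, IH. simpl in Hl. split; auto.
Qed.

Lemma NoDup_words (L : nat) : NoDup (words L).
Proof.
  induction L; simpl; [constructor; [simpl; tauto | constructor]|].
  apply NoDup_flat_map_disjoint.
  - apply seq_NoDup.
  - intros a _. apply NoDup_map_NoDup_ForallPairs; auto. intros x y _ _ H; inversion H; auto.
  - intros a b x _ _ Hab H1 H2. apply in_map_iff in H1, H2.
    destruct H1 as [? [<- _]]. destruct H2 as [? [E _]]. inversion E; auto.
Qed.

Lemma length_words (L : nat) : length (words L) = (d ^ L)%nat.
Proof.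
  induction L; simpl; auto.
  assert (H : forall l, length (flat_map (fun a => map (cons a) (words L)) l) = (length l * d ^ L)%nat).
  { induction l; simpl; auto. rewrite length_app, length_map, IHl, IHL. lia. }
  rewrite H, length_seq. auto.
Qed.

Definition short_words (L : nat) : list (list nat) := flat_map words (seq 0 L).

Lemma in_short_words (L : nat) (x : list nat) :
  In x (short_words L) <-> (length x < L)%nat /\ valid d x.
Proof.
  unfold short_words. rewrite in_flat_map. split.
  - intros [k [Hk Hx]]. apply in_seq in Hk. apply in_words in Hx. destruct Hx; split; [lia | auto].
  - intros [H1 H2]. exists (length x). split; [apply in_seq; lia | apply in_words; auto].
Qed.

Lemma NoDup_short_words (L : nat) : NoDup (short_words L).
Proof.
  apply NoDup_flat_map_disjoint; [apply seq_NoDup | intros; apply NoDup_words|].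
  intros a b x _ _ Hab H1 H2. apply in_words in H1, H2. destruct H1, H2. lia.
Qed.

Definition subtree (v : list nat) (L : nat) : list (list nat) := map (app v) (short_words L).

Lemma in_subtree (v : list nat) (L : nat) (y : list nat) :
  In y (subtree v L) <-> exists x, y = v ++ x /\ (length x < L)%nat /\ valid d x.
Proof.
  unfold subtree. rewrite in_map_iff. split.
  - intros [x [<- Hx]]. apply in_short_words in Hx. exists x. tauto.
  - intros [x [-> Hx]]. exists x. split; auto. apply in_short_words; auto.
Qed.

Lemma NoDup_subtree (v : list nat) (L : nat) : NoDup (subtree v L).
Proof.
  apply NoDup_map_NoDup_ForallPairs; [|apply NoDup_short_words].
  intros x y _ _ H. apply app_inv_head in H. auto.
Qed.

Lemma subtree_valid (v : list nat) (L : nat) : valid d v -> Forall (valid d) (subtree v L).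
Proof.
  intros Hv. apply Forall_forall. intros y Hy. apply in_subtree in Hy.
  destruct Hy as [x [-> [_ Hx]]]. apply valid_app; auto.
Qed.

Lemma subtree_incl (v : list nat) (L L' : nat) : (L <= L')%nat -> incl (subtree v L) (subtree v L').
Proof.
  intros HL y Hy. apply in_subtree in Hy. destruct Hy as [x [-> [Hx Hv]]].
  apply in_subtree. exists x. repeat split; auto. lia.
Qed.

Lemma in_subtree_prefix (v w : list nat) (L i : nat) :
  In w (words L) -> (i < L)%nat -> In (v ++ firstn i w) (subtree v L).
Proof.
  intros Hw Hi. apply in_words in Hw. destruct Hw as [Hl Hv].
  apply in_subtree. exists (firstn i w). repeat split; auto.
  - rewrite length_firstn. lia.
  - apply valid_firstn; auto.
Qed.

Lemma in_subtree_of_block (v w : list nat) (L K : nat) (y : list nat) :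
  In w (words L) -> In y (subtree (v ++ w) K) -> In y (subtree v (L + K)).
Proof.
  intros Hw Hy. apply in_words in Hw. destruct Hw as [Hlw Hvw].
  apply in_subtree in Hy. destruct Hy as [x [-> [Hx Hvx]]].
  apply in_subtree. exists (w ++ x). rewrite app_assoc, length_app.
  repeat split; [lia | apply valid_app; auto].
Qed.

Definition block_subtrees (v : list nat) (L K : nat) : list (list nat) :=
  concat (map (fun w => subtree (v ++ w) K) (words L)).

Lemma in_block_subtrees (v : list nat) (L K : nat) (y : list nat) :
  In y (block_subtrees v L K) <-> exists w, In w (words L) /\ In y (subtree (v ++ w) K).
Proof.
  unfold block_subtrees. rewrite in_concat. split.
  - intros [l [Hl Hy]]. apply in_map_iff in Hl. destruct Hl as [w [<- Hw]]. eauto.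
  - intros [w [Hw Hy]]. exists (subtree (v ++ w) K). split; auto. apply in_map_iff; eauto.
Qed.

Lemma subtree_blocks_disjoint (v w1 w2 : list nat) (L K : nat) (y : list nat) :
  In w1 (words L) -> In w2 (words L) -> w1 <> w2 ->
  In y (subtree (v ++ w1) K) -> ~ In y (subtree (v ++ w2) K).
Proof.
  intros H1 H2 Hne Hy1 Hy2. apply in_words in H1, H2.
  apply in_subtree in Hy1, Hy2. destruct Hy1 as [x1 [-> _]]. destruct Hy2 as [x2 [E _]].
  rewrite <- !app_assoc in E. apply app_inv_head in E.
  apply Hne. eapply app_inv_same_length; [|exact E]. lia.
Qed.

Lemma subtree_block_disjoint_top (v w : list nat) (L K : nat) (y : list nat) :
  In w (words L) -> In y (subtree (v ++ w) K) -> ~ In y (subtree v L).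
Proof.
  intros Hw Hy1 Hy2. apply in_words in Hw.
  apply in_subtree in Hy1, Hy2. destruct Hy1 as [x1 [-> _]]. destruct Hy2 as [x2 [E [Hl2 _]]].
  rewrite <- app_assoc in E. apply app_inv_head in E.
  assert (length (w ++ x1) = length x2) by (rewrite E; auto).
  rewrite length_app in H. lia.
Qed.

Lemma NoDup_subtree_blocks (v : list nat) (L K : nat) :
  NoDup (subtree v L ++ block_subtrees v L K).
Proof.
  apply NoDup_app; [apply NoDup_subtree | | ].
  - unfold block_subtrees. rewrite <- flat_map_concat_map. apply NoDup_flat_map_disjoint.
    + apply NoDup_words.
    + intros; apply NoDup_subtree.
    + intros a b y Ha Hb Hab H1 H2. apply (subtree_blocks_disjoint v a b L K y); auto.
  - intros y Hy Hc. apply in_block_subtrees in Hc. destruct Hc as [w [Hw Hyw]].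
    apply (subtree_block_disjoint_top v w L K y); auto.
Qed.

Lemma block_subtrees_valid (v : list nat) (L K : nat) :
  valid d v -> Forall (valid d) (block_subtrees v L K).
Proof.
  intros Hv. apply Forall_forall. intros y Hy. apply in_block_subtrees in Hy.
  destruct Hy as [w [Hw Hy]]. apply in_words in Hw.
  assert (Hvw : valid d (v ++ w)) by (apply valid_app; auto; apply Hw).
  exact (proj1 (Forall_forall _ _) (subtree_valid (v ++ w) K Hvw) y Hy).
Qed.

Lemma subtree_incl_blocks (v : list nat) (L K : nat) :
  incl (subtree v (L + K)) (subtree v L ++ block_subtrees v L K).
Proof.
  intros y Hy. apply in_subtree in Hy. destruct Hy as [x [-> [Hlx Hvx]]].
  apply in_or_app. destruct (Nat.lt_ge_cases (length x) L) as [Hs|Hs].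
  - left. apply in_subtree. eauto.
  - right. apply in_block_subtrees. exists (firstn L x). split.
    + apply in_words. split; [rewrite length_firstn; lia | apply valid_firstn; auto].
    + apply in_subtree. exists (skipn L x). rewrite <- app_assoc, firstn_skipn.
      repeat split; [rewrite length_skipn; lia | apply valid_skipn; auto].
Qed.

End TreeWords.

Definition indic (p : Prop) : R := if excluded_middle_informative p then 1 else 0.

Lemma indic_true (p : Prop) : p -> indic p = 1.
Proof. unfold indic; destruct (excluded_middle_informative p); tauto. Qed.

Lemma indic_false (p : Prop) : ~ p -> indic p = 0.
Proof. unfold indic; destruct (excluded_middle_informative p); tauto. Qed.

Lemma indic_bounds (p : Prop) : 0 <= indic p <= 1.
Proof. unfold indic; destruct (excluded_middle_informative p); lra. Qed.

Lemma indic_iff (p q : Prop) : (p <-> q) -> indic p = indic q.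
Proof.
  intros H. unfold indic.
  destruct (excluded_middle_informative p), (excluded_middle_informative q); tauto.
Qed.

Lemma indic_and (p q : Prop) : indic (p /\ q) = indic p * indic q.
Proof.
  unfold indic; destruct (excluded_middle_informative p), (excluded_middle_informative q),
    (excluded_middle_informative (p /\ q)); try tauto; lra.
Qed.

Lemma indic_not (p : Prop) : indic (~ p) = 1 - indic p.
Proof.
  unfold indic; destruct (excluded_middle_informative p), (excluded_middle_informative (~ p));
    try tauto; lra.
Qed.

Lemma indic_forall_in {I : Type} (l : list I) (Q : I -> Prop) :
  indic (forall i, In i l -> Q i) = prodR (map (fun i => indic (Q i)) l).
Proof.
  induction l as [|a l IH]; simpl; [apply indic_true; tauto|].
  rewrite <- IH, <- indic_and. apply indic_iff. split.
  - intros H; split; auto.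
  - intros [H1 H2] i [<-|Hi]; auto.
Qed.

Lemma prodR_one_minus_indic_le {I : Type} (l : list I) (Q : I -> Prop) (eps : R) :
  0 <= eps <= 1 ->
  prodR (map (fun i => 1 - eps * indic (Q i)) l)
  <= 1 + eps * eps * (INR (length l) * INR (length l)) - eps * sumR (map (fun i => indic (Q i)) l).
Proof.
  intros Heps. set (T := sumR (map (fun i => indic (Q i)) l)).
  assert (HT : 0 <= T <= INR (length l)).
  { split; [apply sumR_map_nonneg; intros; apply indic_bounds|].
    rewrite <- (Rmult_1_r (INR _)), <- sumR_map_const. apply sumR_map_le. intros; apply indic_bounds. }
  eapply Rle_trans; [apply prodR_one_minus_le|].
  - intros i _. pose proof (indic_bounds (Q i)). split; nra.
  - rewrite sumR_map_scal. fold T.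
    assert (T * T <= INR (length l) * INR (length l)) by (apply Rmult_le_compat; lra). nra.
Qed.

(** Configurations [X -> nat] of finitely many independent coordinates, the
    coordinate [x] taking the value [a <= M] with probability [q x a]. *)
Section ProductMeasure.
Context {X : Type} (X_eq_dec : forall x y : X, {x = y} + {x <> y}) (M : nat) (q : X -> nat -> R)
  (q_nonneg : forall x a, 0 <= q x a) (q_sum : forall x, sumR (map (q x) (seq 0 (S M))) = 1).

Definition upd (g : X -> nat) (u : X) (a : nat) : X -> nat :=
  fun x => if X_eq_dec x u then a else g x.

Lemma upd_eq (g : X -> nat) (u : X) (a : nat) : upd g u a u = a.
Proof. unfold upd. destruct (X_eq_dec u u); congruence. Qed.

Lemma upd_neq (g : X -> nat) (u : X) (a : nat) (x : X) : x <> u -> upd g u a x = g x.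
Proof. unfold upd. destruct (X_eq_dec x u); congruence. Qed.

Lemma upd_comm (g : X -> nat) (u x : X) (a b : nat) :
  u <> x -> upd (upd g u a) x b = upd (upd g x b) u a.
Proof.
  intro H. apply functional_extensionality; intro y. unfold upd.
  destruct (X_eq_dec y x), (X_eq_dec y u); congruence.
Qed.

Lemma upd_same (g : X -> nat) (u : X) : upd g u (g u) = g.
Proof. apply functional_extensionality; intro y. unfold upd. destruct (X_eq_dec y u); congruence. Qed.

Definition determined_by (Phi : (X -> nat) -> Prop) (V : list X) : Prop :=
  forall g1 g2, (forall x, In x V -> g1 x = g2 x) -> (Phi g1 <-> Phi g2).

Lemma determined_by_of_imp (Phi : (X -> nat) -> Prop) (V : list X) :
  (forall g1 g2, (forall x, In x V -> g1 x = g2 x) -> Phi g1 -> Phi g2) -> determined_by Phi V.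
Proof. intros H g1 g2 Hg. split; apply H; auto. intros x Hx. symmetry; auto. Qed.

Lemma determined_by_incl (Phi : (X -> nat) -> Prop) (V V' : list X) :
  determined_by Phi V -> incl V V' -> determined_by Phi V'.
Proof. intros H Hi g1 g2 Hg. apply H. intros x Hx. apply Hg, Hi, Hx. Qed.

Lemma determined_by_and (Phi Psi : (X -> nat) -> Prop) (V W : list X) :
  determined_by Phi V -> determined_by Psi W -> determined_by (fun g => Phi g /\ Psi g) (V ++ W).
Proof.
  intros H1 H2 g1 g2 Hg.
  rewrite (H1 g1 g2), (H2 g1 g2); [tauto | |]; intros; apply Hg, in_or_app; auto.
Qed.

Definition ignores (f : (X -> nat) -> R) (V : list X) : Prop :=
  forall g x a, In x V -> f (upd g x a) = f g.

Lemma ignores_incl (f : (X -> nat) -> R) (V V' : list X) :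
  ignores f V' -> incl V V' -> ignores f V.
Proof. intros H Hi g x a Hx. apply H, Hi, Hx. Qed.

Lemma ignores_indic (Phi : (X -> nat) -> Prop) (S V : list X) :
  determined_by Phi S -> (forall x, In x V -> ~ In x S) -> ignores (fun g => indic (Phi g)) V.
Proof.
  intros Hd Hdis g x a Hx. apply indic_iff, Hd. intros y Hy.
  apply upd_neq. intros ->. apply (Hdis x Hx Hy).
Qed.

Lemma ignores_prodR {I : Type} (K : list I) (f : I -> (X -> nat) -> R) (V : list X) :
  (forall k, In k K -> ignores (f k) V) -> ignores (fun g => prodR (map (fun k => f k g) K)) V.
Proof.
  intros H g x a Hx. induction K as [|k K IH]; cbn [map prodR fold_right]; auto.
  unfold prodR in IH. rewrite IH by (intros; apply H; simpl; auto).
  rewrite (H k) by (simpl; auto). reflexivity.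
Qed.

(** [Ex V f h] integrates [f] over the coordinates in [V], those outside [V]
    being frozen at their values in [h]. *)
Fixpoint Ex (V : list X) (f : (X -> nat) -> R) (h : X -> nat) : R :=
  match V with
  | [] => f h
  | u :: V' => sumR (map (fun a => q u a * Ex V' f (upd h u a)) (seq 0 (S M)))
  end.

Lemma Ex_ext (V : list X) (f1 f2 : (X -> nat) -> R) (h : X -> nat) :
  (forall g, f1 g = f2 g) -> Ex V f1 h = Ex V f2 h.
Proof. intros H. replace f1 with f2; auto. apply functional_extensionality; auto. Qed.

Lemma Ex_const (V : list X) (c : R) (h : X -> nat) : Ex V (fun _ => c) h = c.
Proof.
  revert h. induction V as [|u V IH]; intros h; cbn [Ex]; auto.
  rewrite (sumR_map_ext _ _ (fun a => c * q u a)) by (intros; rewrite IH; ring).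
  rewrite sumR_map_scal, q_sum. ring.
Qed.

Lemma Ex_plus (V : list X) (f1 f2 : (X -> nat) -> R) (h : X -> nat) :
  Ex V (fun g => f1 g + f2 g) h = Ex V f1 h + Ex V f2 h.
Proof.
  revert h. induction V as [|u V IH]; intros h; cbn [Ex]; auto.
  rewrite <- sumR_map_plus. apply sumR_map_ext. intros a _. rewrite IH. ring.
Qed.

Lemma Ex_scal (V : list X) (c : R) (f : (X -> nat) -> R) (h : X -> nat) :
  Ex V (fun g => c * f g) h = c * Ex V f h.
Proof.
  revert h. induction V as [|u V IH]; intros h; cbn [Ex]; auto.
  rewrite <- sumR_map_scal. apply sumR_map_ext. intros a _. rewrite IH. ring.
Qed.

Lemma Ex_sum {I : Type} (V : list X) (l : list I) (f : I -> (X -> nat) -> R) (h : X -> nat) :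
  Ex V (fun g => sumR (map (fun i => f i g) l)) h = sumR (map (fun i => Ex V (f i) h) l).
Proof.
  induction l as [|i l IH]; cbn [map sumR fold_right].
  - apply Ex_const.
  - rewrite Ex_plus. unfold sumR in IH. rewrite IH. reflexivity.
Qed.

Lemma Ex_mono (V : list X) (f1 f2 : (X -> nat) -> R) (h : X -> nat) :
  (forall g, f1 g <= f2 g) -> Ex V f1 h <= Ex V f2 h.
Proof.
  revert h. induction V as [|u V IH]; intros h Hf; cbn [Ex]; auto.
  apply sumR_map_le. intros a _. apply Rmult_le_compat_l; auto.
Qed.

Lemma Ex_nonneg (V : list X) (f : (X -> nat) -> R) (h : X -> nat) :
  (forall g, 0 <= f g) -> 0 <= Ex V f h.
Proof. intros Hf. rewrite <- (Ex_const V 0 h). apply Ex_mono; auto. Qed.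

Lemma Ex_app (V1 V2 : list X) (f : (X -> nat) -> R) (h : X -> nat) :
  Ex (V1 ++ V2) f h = Ex V1 (fun g => Ex V2 f g) h.
Proof.
  revert h. induction V1 as [|u V IH]; intros h; cbn [Ex]; auto.
  apply sumR_map_ext. intros. rewrite IH. auto.
Qed.

Lemma Ex_upd_notin (V : list X) (f : (X -> nat) -> R) (h : X -> nat) (u : X) (a : nat) :
  ~ In u V -> Ex V f (upd h u a) = Ex V (fun g => f (upd g u a)) h.
Proof.
  revert h. induction V as [|x V IH]; intros h Hu; cbn [Ex]; auto.
  apply sumR_map_ext. intros b _.
  rewrite upd_comm by (intros ->; apply Hu; simpl; auto).
  rewrite IH; auto. intro; apply Hu; simpl; auto.
Qed.

Lemma ignores_Ex (V W : list X) (f : (X -> nat) -> R) :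
  (forall x, In x W -> ~ In x V) -> ignores f W -> ignores (Ex V f) W.
Proof.
  intros Hd Hf g x a Hx. rewrite Ex_upd_notin by auto.
  apply Ex_ext. intro g'. apply Hf, Hx.
Qed.

Lemma Ex_ignores_mul (V : list X) (c f : (X -> nat) -> R) (h : X -> nat) :
  ignores c V -> Ex V (fun g => c g * f g) h = c h * Ex V f h.
Proof.
  revert h. induction V as [|u V IH]; intros h Hc; cbn [Ex]; auto.
  rewrite <- sumR_map_scal. apply sumR_map_ext. intros a _.
  rewrite IH by (eapply ignores_incl; eauto; intros x Hx; simpl; auto).
  rewrite (Hc h u a) by (simpl; auto). ring.
Qed.

Lemma Ex_mul_disjoint (V1 V2 : list X) (f1 f2 : (X -> nat) -> R) (h : X -> nat) :
  (forall x, In x V1 -> ~ In x V2) -> ignores f1 V2 -> ignores f2 V1 ->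
  Ex (V1 ++ V2) (fun g => f1 g * f2 g) h = Ex V1 f1 h * Ex V2 f2 h.
Proof.
  intros Hd H1 H2. rewrite Ex_app.
  rewrite (Ex_ext V1 _ (fun g => Ex V2 f2 g * f1 g)).
  - rewrite Ex_ignores_mul; [ring|]. apply ignores_Ex; auto.
  - intros g. rewrite Ex_ignores_mul; auto. ring.
Qed.

Lemma Ex_prodR_disjoint {I : Type} (K : list I) (Vf : I -> list X) (f : I -> (X -> nat) -> R)
    (h : X -> nat) :
  NoDup K ->
  (forall i j, In i K -> In j K -> i <> j -> forall x, In x (Vf i) -> ~ In x (Vf j)) ->
  (forall i j, In i K -> In j K -> i <> j -> ignores (f i) (Vf j)) ->
  Ex (concat (map Vf K)) (fun g => prodR (map (fun i => f i g) K)) h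
  = prodR (map (fun i => Ex (Vf i) (f i) h) K).
Proof.
  induction K as [|i K IH]; intros HN Hd Hi; [reflexivity|].
  inversion HN as [|? ? HiK HN']; subst.
  cbn [map concat]. change (prodR (?a :: ?l)) with (a * prodR l).
  rewrite (Ex_mul_disjoint (Vf i) (concat (map Vf K)) (f i) (fun g => prodR (map (fun i => f i g) K))).
  - rewrite IH; auto; intros i0 j H1 H2 H3; [apply Hd | apply Hi]; simpl; auto.
  - intros x Hx Hc. apply in_concat in Hc. destruct Hc as [l [Hl Hxl]].
    apply in_map_iff in Hl. destruct Hl as [j [<- Hj]].
    apply (Hd i j (or_introl eq_refl) (or_intror Hj) ltac:(intros ->; contradiction) x); auto.
  - intros g x a Hx. apply in_concat in Hx. destruct Hx as [l [Hl Hxl]].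
    apply in_map_iff in Hl. destruct Hl as [j [<- Hj]].
    apply (Hi i j); simpl; auto. intros ->; contradiction.
  - apply ignores_prodR. intros j Hj. apply Hi; simpl; auto. intros ->; contradiction.
Qed.

Definition increasing (f : (X -> nat) -> R) (V : list X) : Prop :=
  forall g x a b, In x V -> (a <= b)%nat -> f (upd g x a) <= f (upd g x b).

Lemma increasing_mul (f1 f2 : (X -> nat) -> R) (V : list X) :
  (forall g, 0 <= f1 g) -> (forall g, 0 <= f2 g) -> increasing f1 V -> increasing f2 V ->
  increasing (fun g => f1 g * f2 g) V.
Proof. intros P1 P2 H1 H2 g x a b Hx Hab. apply Rmult_le_compat; auto. Qed.

Lemma increasing_prodR {I : Type} (K : list I) (f : I -> (X -> nat) -> R) (V : list X) :
  (forall k g, In k K -> 0 <= f k g) -> (forall k, In k K -> increasing (f k) V) ->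
  increasing (fun g => prodR (map (fun k => f k g) K)) V.
Proof.
  induction K as [|k K IH]; intros Hp Hm; cbn [map prodR fold_right].
  - intros g x a b _ _. lra.
  - apply increasing_mul; auto with datatypes.
    intros g. apply prodR_map_nonneg. auto with datatypes.
Qed.

Lemma increasing_indic (Phi : (X -> nat) -> Prop) (V : list X) :
  (forall g g', (forall x, (g x <= g' x)%nat) -> Phi g -> Phi g') ->
  increasing (fun g => indic (Phi g)) V.
Proof.
  intros Hmono g x a b _ Hab. unfold indic.
  destruct (excluded_middle_informative (Phi (upd g x a))) as [Ha|];
    destruct (excluded_middle_informative (Phi (upd g x b))) as [|Hb]; try lra.
  exfalso. apply Hb. apply (Hmono (upd g x a)); auto.
  intros y. unfold upd. destruct (X_eq_dec y x); lia.
Qed.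

(** By induction on the coordinates, with Chebyshev's sum inequality for the first one. *)
Theorem Harris (V : list X) (f1 f2 : (X -> nat) -> R) (h : X -> nat) :
  NoDup V -> increasing f1 V -> increasing f2 V ->
  Ex V f1 h * Ex V f2 h <= Ex V (fun g => f1 g * f2 g) h.
Proof.
  revert f1 f2 h. induction V as [|u V IH]; intros f1 f2 h HN H1 H2; cbn [Ex]; [lra|].
  inversion HN as [|? ? Hu HN']; subst.
  assert (Hm : forall f, increasing f (u :: V) -> increasing f V)
    by (intros f Hf g x a b Hx Hab; apply Hf; simpl; auto).
  apply Rle_trans with
    (sumR (map (fun a => q u a * (Ex V f1 (upd h u a) * Ex V f2 (upd h u a))) (seq 0 (S M)))).
  - apply chebyshev_sum; auto; intros a b Hab; rewrite !Ex_upd_notin by auto;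
      apply Ex_mono; intros g; [apply H1 | apply H2]; simpl; auto.
  - apply sumR_map_le. intros a _. apply Rmult_le_compat_l; auto.
Qed.

Lemma Harris_prodR {I : Type} (V : list X) (K : list I) (f : I -> (X -> nat) -> R) (h : X -> nat) :
  NoDup V -> (forall k g, In k K -> 0 <= f k g) -> (forall k, In k K -> increasing (f k) V) ->
  prodR (map (fun k => Ex V (f k) h) K) <= Ex V (fun g => prodR (map (fun k => f k g) K)) h.
Proof.
  intros HN. induction K as [|k K IH]; intros Hp Hm; cbn [map prodR fold_right].
  - rewrite Ex_const. lra.
  - apply Rle_trans with (Ex V (f k) h * Ex V (fun g => prodR (map (fun k => f k g) K)) h).
    + apply Rmult_le_compat_l.
      * apply Ex_nonneg. auto with datatypes.
      * apply IH; auto with datatypes.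
    + apply (Harris V (f k)); auto with datatypes.
      apply increasing_prodR; auto with datatypes.
Qed.

End ProductMeasure.

Definition vertex_eq_dec : forall u v : list nat, {u = v} + {u <> v} := list_eq_dec Nat.eq_dec.
Notation updv := (upd vertex_eq_dec).

(** Radii truncated at [M]: their joint law on finitely many vertices is the
    product measure with weights [weight]. *)
Section TruncatedRadii.
Context {Omega : Type} (F : (Omega -> Prop) -> Prop) (P : (Omega -> Prop) -> R)
  (hP : is_prob_space F P) (d : nat) (Rb : list nat -> Omega -> nat)
  (hRb_rv : forall u, valid d u -> nat_rv F (Rb u))
  (hRb_ind : independent P (valid d) Rb).

Lemma F_determined_radii (V : list (list nat)) (Phi : (list nat -> nat) -> Prop) :
  Forall (valid d) V -> determined_by Phi V -> F (fun w => Phi (fun x => Rb x w)).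
Proof.
  revert Phi. induction V as [|u V IH]; intros Phi HV Hd.
  - apply F_ext with (fun _ => Phi (fun _ => 0%nat)); [|apply (F_const F P hP)].
    intro w. apply Hd. simpl; tauto.
  - inversion HV as [|? ? Hu HV']; subst.
    apply F_ext with (fun w => exists k, Rb u w = k /\ Phi (updv (fun x => Rb x w) u k)).
    + intro w. split.
      * intros [k [<- HP]]. rewrite (upd_same _ (fun x => Rb x w)) in HP. exact HP.
      * intros HP. exists (Rb u w). rewrite (upd_same _ (fun x => Rb x w)). auto.
    + apply (F_exists F P hP). intro k. apply (F_and F P hP); [apply (hRb_rv u Hu k)|].
      apply (IH (fun g => Phi (updv g u k))); auto.
      intros g1 g2 Hg. apply Hd. intros x [<-|Hx]; [rewrite !upd_eq; auto|].
      unfold upd. destruct (vertex_eq_dec x u); auto.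
Qed.

Variable M : nat.

Definition trunc (w : Omega) : list nat -> nat := fun x => Nat.min (Rb x w) M.

Lemma F_determined (V : list (list nat)) (Phi : (list nat -> nat) -> Prop) :
  Forall (valid d) V -> determined_by Phi V -> F (fun w => Phi (trunc w)).
Proof.
  intros HV Hd. apply (F_determined_radii V (fun g => Phi (fun x => Nat.min (g x) M))); auto.
  intros g1 g2 Hg. apply Hd. intros x Hx. rewrite Hg; auto.
Qed.

Lemma F_trunc_eq (u : list nat) (a : nat) : valid d u -> F (fun w => trunc w u = a).
Proof.
  intros Hu. apply (F_determined [u] (fun g => g u = a)); auto.
  intros g1 g2 Hg. rewrite Hg; simpl; tauto.
Qed.

(** Off the tree ([~ valid d u]) the weight is the point mass at [0], only so that
    [weight u] is a probability vector for every [u]. *)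
Definition weight (u : list nat) (a : nat) : R :=
  if excluded_middle_informative (valid d u) then P (fun w => trunc w u = a)
  else indic (a = 0%nat).

Lemma weight_valid (u : list nat) (a : nat) : valid d u -> weight u a = P (fun w => trunc w u = a).
Proof. unfold weight. destruct (excluded_middle_informative (valid d u)); tauto. Qed.

Lemma P_total_trunc (B : Omega -> Prop) (u : list nat) : F B -> valid d u ->
  P B = sumR (map (fun a => P (fun w => B w /\ trunc w u = a)) (seq 0 (S M))).
Proof.
  intros HB Hu. rewrite <- (P_disjoint_union F P hP (S M) (fun a w => B w /\ trunc w u = a)).
  - apply P_ext. intro w. split.
    + intros Hw. exists (trunc w u). split; auto. unfold trunc. lia.
    + intros [i [_ [H _]]]; auto.
  - intros i _. apply (F_and F P hP); auto. apply F_trunc_eq; auto.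
  - intros i j _ _ Hij w [_ H1] [_ H2]. congruence.
Qed.

Lemma weight_nonneg (u : list nat) (a : nat) : 0 <= weight u a.
Proof.
  unfold weight. destruct (excluded_middle_informative (valid d u)) as [Hu|_].
  - apply (P_nonneg F P hP), F_trunc_eq, Hu.
  - apply indic_bounds.
Qed.

Lemma weight_sum (u : list nat) : sumR (map (weight u) (seq 0 (S M))) = 1.
Proof.
  destruct (classic (valid d u)) as [Hu|Hu].
  - rewrite <- (ps_total _ _ hP), (P_total_trunc (fun _ => True) u (F_full F P hP) Hu).
    apply sumR_map_ext. intros a _. rewrite weight_valid by auto. apply P_ext. tauto.
  - rewrite (sumR_map_ext _ _ (fun a => indic (a = 0%nat)))
      by (intros a _; unfold weight; destruct (excluded_middle_informative (valid d u)); tauto).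
    change (seq 0 (S M)) with (0%nat :: seq 1 M). cbn [map].
    change (sumR (?x :: ?l)) with (x + sumR l).
    rewrite indic_true, (sumR_map_ext _ _ (fun _ => 0)), sumR_map_const by
      (reflexivity || (intros a Ha; apply in_seq in Ha; apply indic_false; lia)).
    ring.
Qed.

Local Notation E := (Ex vertex_eq_dec M weight).

Definition agrees (V : list (list nat)) (g : list nat -> nat) (w : Omega) : Prop :=
  forall x, In x V -> trunc w x = g x.

Lemma prodR_weight_upd_notin (l : list (list nat)) (g : list nat -> nat) (u : list nat) (a : nat) :
  ~ In u l ->
  prodR (map (fun x => weight x (updv g u a x)) l) = prodR (map (fun x => weight x (g x)) l).
Proof.
  intros Hu. f_equal. apply map_ext_in. intros x Hx.
  rewrite upd_neq; auto. intros ->. contradiction.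
Qed.

Lemma prodR_weight_middle (W V : list (list nat)) (u : list nat) (g : list nat -> nat) :
  prodR (map (fun x => weight x (g x)) (W ++ u :: V))
  = weight u (g u) * prodR (map (fun x => weight x (g x)) (W ++ V)).
Proof.
  rewrite (prodR_perm _ _ (Permutation_map _ (Permutation_sym (Permutation_middle W V u)))).
  reflexivity.
Qed.

(** The value [M] of a truncated radius carries the mass left by the others. *)
Lemma P_trunc_top (A : Omega -> Prop) (u : list nat) (Pi : R) :
  F A -> valid d u -> P A = Pi ->
  (forall a, (a < M)%nat -> P (fun w => A w /\ trunc w u = a) = weight u a * Pi) ->
  P (fun w => A w /\ trunc w u = M) = weight u M * Pi.
Proof.
  intros HFA Hu HA Hlow.
  pose proof (P_total_trunc A u HFA Hu) as Htot. pose proof (weight_sum u) as Hsum.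
  rewrite sumR_seq_last in Htot, Hsum.
  rewrite (sumR_map_ext _ _ (fun a => Pi * weight u a)), sumR_map_scal in Htot
    by (intros a Ha; apply in_seq in Ha; rewrite Hlow by lia; ring).
  nra.
Qed.

Definition pinned (W : list (list nat)) (g : list nat -> nat) (w : Omega) : Prop :=
  forall x, In x W -> Rb x w = g x.

Lemma P_pinned (W : list (list nat)) (g : list nat -> nat) :
  NoDup W -> Forall (valid d) W -> (forall x, In x W -> (g x < M)%nat) ->
  P (pinned W g) = prodR (map (fun x => weight x (g x)) W).
Proof.
  intros HN HV HW.
  rewrite (P_ext P _ (fun w => Forall (fun x => Rb x w = g x) W))
    by (intro w; rewrite Forall_forall; reflexivity).
  rewrite (hRb_ind W g HN HV). f_equal. apply map_ext_in. intros x Hx.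
  rewrite weight_valid by (exact (proj1 (Forall_forall _ _) HV x Hx)).
  apply P_ext. intro w. unfold trunc. specialize (HW x Hx). lia.
Qed.

Lemma F_pinned (W : list (list nat)) (g : list nat -> nat) : Forall (valid d) W -> F (pinned W g).
Proof.
  intros HW. apply (F_determined_radii W (fun g' => forall x, In x W -> g' x = g x)); auto.
  apply determined_by_of_imp. intros g1 g2 Hg H x Hx. rewrite <- Hg; auto.
Qed.

Lemma F_agrees (V : list (list nat)) (g : list nat -> nat) : Forall (valid d) V -> F (agrees V g).
Proof.
  intros HV. apply (F_determined V (fun g' => forall x, In x V -> g' x = g x)); auto.
  apply determined_by_of_imp. intros g1 g2 Hg H x Hx. rewrite <- Hg; auto.
Qed.

Lemma agrees_upd_notin (V : list (list nat)) (g : list nat -> nat) (u : list nat) (a : nat) (w : Omega) :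
  ~ In u V -> (agrees V (updv g u a) w <-> agrees V g w).
Proof.
  intros Hu. unfold agrees.
  split; intros H x Hx; rewrite H by auto; [|symmetry]; apply upd_neq; intros ->; contradiction.
Qed.

Lemma agrees_cons_upd (V : list (list nat)) (g : list nat -> nat) (u : list nat) (a : nat) (w : Omega) :
  ~ In u V -> (agrees (u :: V) (updv g u a) w <-> agrees V g w /\ trunc w u = a).
Proof.
  intros Hu. rewrite <- (agrees_upd_notin V g u a w Hu). unfold agrees. simpl. split.
  - intros H. split; auto. rewrite H by auto. apply upd_eq.
  - intros [H1 H2] x [<-|Hx]; auto. rewrite upd_eq. auto.
Qed.

Lemma pinned_snoc_upd (W : list (list nat)) (g : list nat -> nat) (u : list nat) (a : nat) (w : Omega) :
  ~ In u W -> (a < M)%nat ->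
  (pinned (W ++ [u]) (updv g u a) w <-> pinned W g w /\ trunc w u = a).
Proof.
  intros Hu Ha. unfold pinned, trunc. split.
  - intros H. split.
    + intros x Hx. rewrite H by (apply in_or_app; auto). apply upd_neq. intros ->; contradiction.
    + rewrite H by (apply in_or_app; right; left; auto). rewrite upd_eq. lia.
  - intros [H1 H2] x Hx. apply in_app_or in Hx. destruct Hx as [Hx|[<-|[]]].
    + rewrite upd_neq by (intros ->; contradiction). auto.
    + rewrite upd_eq. lia.
Qed.

(** Induction on the coordinates left truncated; a truncated coordinate with
    value below [M] is exact and gets moved to [W]. *)
Lemma P_pinned_agrees (V : list (list nat)) : forall (W : list (list nat)) (g : list nat -> nat),
  NoDup (W ++ V) -> Forall (valid d) (W ++ V) ->
  (forall x, In x W -> (g x < M)%nat) -> (forall x, In x V -> (g x <= M)%nat) ->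
  P (fun w => pinned W g w /\ agrees V g w) = prodR (map (fun x => weight x (g x)) (W ++ V)).
Proof.
  induction V as [|u V IH]; intros W g HN HV HW HVM.
  - rewrite app_nil_r in *. rewrite <- P_pinned by auto.
    apply P_ext. intro w. unfold agrees. simpl. tauto.
  - assert (Hperm : forall l : list (list nat), Permutation (W ++ u :: V) l ->
                    NoDup l /\ Forall (valid d) l).
    { intros l Hl. split; [eapply Permutation_NoDup | eapply Permutation_Forall]; eauto. }
    destruct (Hperm (u :: W ++ V)) as [HN' HV']; [apply Permutation_sym, Permutation_middle|].
    destruct (Hperm ((W ++ [u]) ++ V)) as [HN'' HV'']; [rewrite <- app_assoc; reflexivity|].
    inversion HN' as [|? ? Hu HNWV]; inversion HV' as [|? ? Hvu HVWV]; subst.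
    assert (HuW : ~ In u W) by (intro; apply Hu, in_or_app; auto).
    assert (HuV : ~ In u V) by (intro; apply Hu, in_or_app; auto).
    destruct (proj1 (Forall_app _ W V) HVWV) as [HVW HVV].
    set (A := fun w => pinned W g w /\ agrees V g w).
    set (Pi := prodR (map (fun x => weight x (g x)) (W ++ V))).
    assert (Hlow : forall a, (a < M)%nat -> P (fun w => A w /\ trunc w u = a) = weight u a * Pi).
    { intros a Ha.
      rewrite (P_ext P _ (fun w => pinned (W ++ [u]) (updv g u a) w /\ agrees V (updv g u a) w))
        by (intro w; unfold A; rewrite pinned_snoc_upd, agrees_upd_notin by auto; tauto).
      assert (Hbound : forall x, In x (W ++ [u]) -> (updv g u a x < M)%nat).
      { intros x Hx. apply in_app_or in Hx. destruct Hx as [Hx|[<-|[]]].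
        - rewrite upd_neq by (intros ->; contradiction). auto.
        - rewrite upd_eq. auto. }
      rewrite IH; auto.
      - rewrite <- app_assoc. cbn [app].
        rewrite prodR_weight_middle, upd_eq, prodR_weight_upd_notin; auto.
      - intros x Hx. rewrite upd_neq by (intros ->; contradiction). apply HVM; simpl; auto. }
    assert (Htop : P (fun w => A w /\ trunc w u = M) = weight u M * Pi).
    { apply P_trunc_top; auto; [apply (F_and F P hP); [apply F_pinned | apply F_agrees]; auto|].
      apply IH; auto. intros; apply HVM; simpl; auto. }
    rewrite (P_ext P _ (fun w => A w /\ trunc w u = g u)), prodR_weight_middle.
    + destruct (Nat.eq_dec (g u) M) as [->|Hne]; [apply Htop | apply Hlow].
      specialize (HVM u (or_introl eq_refl)). lia.
    + intro w. unfold A, agrees. simpl. split.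
      * intros [H1 H2]. repeat split; auto.
      * intros [[H1 H2] H3]. split; auto. intros x [<-|Hx]; auto.
Qed.

Lemma P_agrees (V : list (list nat)) (g : list nat -> nat) :
  NoDup V -> Forall (valid d) V -> (forall x, In x V -> (g x <= M)%nat) ->
  P (agrees V g) = prodR (map (fun x => weight x (g x)) V).
Proof.
  intros HN HV Hg. rewrite <- (app_nil_l V) at 2. rewrite <- (P_pinned_agrees V [] g); auto.
  - apply P_ext. intro w. unfold pinned. simpl. tauto.
  - simpl; tauto.
Qed.

Lemma P_agrees_cons_upd (u : list nat) (W : list (list nat)) (h : list nat -> nat) (a : nat) :
  NoDup (u :: W) -> Forall (valid d) (u :: W) -> (forall x, In x W -> (h x <= M)%nat) ->
  (a <= M)%nat -> P (agrees (u :: W) (updv h u a)) = weight u a * P (agrees W h).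
Proof.
  intros HN HV Hb Ha. inversion HN as [|? ? Hu HN']; inversion HV; subst.
  rewrite !P_agrees; auto.
  - simpl. rewrite upd_eq, prodR_weight_upd_notin; auto.
  - intros x [<-|Hx]; [rewrite upd_eq; auto|]. rewrite upd_neq by (intros ->; contradiction). auto.
Qed.

Lemma P_determined_agrees (V : list (list nat)) :
  forall (W : list (list nat)) (h : list nat -> nat) (Phi : (list nat -> nat) -> Prop),
  NoDup (V ++ W) -> Forall (valid d) (V ++ W) -> determined_by Phi (V ++ W) ->
  (forall x, In x W -> (h x <= M)%nat) ->
  P (fun w => Phi (trunc w) /\ agrees W h w) = P (agrees W h) * E V (fun g => indic (Phi g)) h.
Proof.
  induction V as [|u V IH]; intros W h Phi HN HV Hd Hb; cbn [app Ex] in *.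
  - destruct (classic (Phi h)) as [Hp|Hp].
    + rewrite indic_true, Rmult_1_r by auto. apply P_ext. intro w. split; [tauto|].
      intros Hc. split; auto. apply (Hd h (trunc w)); auto. intros x Hx. symmetry; auto.
    + rewrite indic_false, Rmult_0_r by auto. rewrite <- (P_empty F P hP). apply P_ext.
      intro w. split; [|tauto]. intros [H1 H2]. apply Hp, (Hd (trunc w) h H2); auto.
  - inversion HN as [|? ? Hnin HN']; inversion HV as [|? ? Hvu HV']; subst.
    assert (HuW : ~ In u W) by (intro; apply Hnin, in_or_app; auto).
    assert (Hperm : Permutation (u :: V ++ W) (V ++ u :: W)) by apply Permutation_middle.
    assert (HuWN : NoDup (u :: W)) by (constructor; auto; eapply NoDup_app_remove_l; eauto).
    assert (HuWV : Forall (valid d) (u :: W))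
      by (constructor; auto; apply (proj1 (Forall_app _ V W) HV')).
    assert (HFB : F (fun w => Phi (trunc w) /\ agrees W h w)).
    { apply (F_and F P hP); [apply (F_determined (u :: V ++ W)); auto |].
      apply F_agrees. inversion HuWV; auto. }
    rewrite (P_total_trunc _ u HFB Hvu). cbn [Ex].
    rewrite <- sumR_map_scal. apply sumR_map_ext. intros a Ha. apply in_seq in Ha.
    rewrite (P_ext P _ (fun w => Phi (trunc w) /\ agrees (u :: W) (updv h u a) w))
      by (intro w; rewrite agrees_cons_upd by auto; tauto).
    rewrite IH, P_agrees_cons_upd; auto; [ring | lia | | | |].
    + eapply Permutation_NoDup; [exact Hperm | constructor; auto].
    + eapply Permutation_Forall; [exact Hperm | constructor; auto].
    + eapply determined_by_incl; [exact Hd|]. intros x Hx.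
      apply Permutation_in with (u :: V ++ W); [exact Hperm | exact Hx].
    + intros x [<-|Hx]; [rewrite upd_eq; lia|]. rewrite upd_neq by (intros ->; contradiction).
      auto.
Qed.

Lemma P_eq_Ex (V : list (list nat)) (Phi : (list nat -> nat) -> Prop) (h : list nat -> nat) :
  NoDup V -> Forall (valid d) V -> determined_by Phi V ->
  P (fun w => Phi (trunc w)) = E V (fun g => indic (Phi g)) h.
Proof.
  intros HN HV Hd.
  pose proof (P_determined_agrees V [] h Phi) as H. rewrite app_nil_r in H.
  rewrite (P_ext P (agrees [] h) (fun _ => True)), (ps_total _ _ hP), Rmult_1_l in H
    by (intro; unfold agrees; simpl; tauto).
  rewrite <- H; auto; [|simpl; tauto].
  apply P_ext. intro w. unfold agrees; simpl; tauto.
Qed.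

Lemma P_and_independent (V1 V2 : list (list nat)) (Phi Psi : (list nat -> nat) -> Prop) :
  NoDup V1 -> NoDup V2 -> (forall x, In x V1 -> ~ In x V2) ->
  Forall (valid d) V1 -> Forall (valid d) V2 -> determined_by Phi V1 -> determined_by Psi V2 ->
  P (fun w => Phi (trunc w) /\ Psi (trunc w)) = P (fun w => Phi (trunc w)) * P (fun w => Psi (trunc w)).
Proof.
  intros HN1 HN2 Hdis HV1 HV2 H1 H2. set (h0 := fun _ : list nat => 0%nat).
  rewrite (P_eq_Ex (V1 ++ V2) (fun g => Phi g /\ Psi g) h0), (P_eq_Ex V1 Phi h0),
    (P_eq_Ex V2 Psi h0); auto.
  - rewrite (Ex_ext _ _ _ _ _ (fun g => indic (Phi g) * indic (Psi g))) by (intros; apply indic_and).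
    apply Ex_mul_disjoint; auto; eapply ignores_indic; eauto.
    intros x Hx2 Hx1. apply (Hdis x Hx1 Hx2).
  - apply NoDup_app; auto.
  - apply Forall_app; auto.
  - apply determined_by_and; auto.
Qed.

End TruncatedRadii.

Section Blocks.
Variables d M : nat.

(** The vertex at distance [k + 1] below [v] on the block path [w] lies in the
    cone of one of the vertices before it on that path. *)
Definition covered (v w : list nat) (k : nat) (g : list nat -> nat) : Prop :=
  exists i, (i <= k)%nat /\ (S k - i <= g (v ++ firstn i w))%nat.

Definition crossed (v w : list nat) (g : list nat -> nat) : Prop :=
  forall k, (k < M)%nat -> covered v w k g.

Fixpoint alive (v : list nat) (m : nat) (g : list nat -> nat) : Prop :=
  match m with
  | 0 => True
  | S m => exists w, In w (words d M) /\ crossed v w g /\ alive (v ++ w) m g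
  end.

Lemma covered_mono (v w : list nat) (k : nat) (g g' : list nat -> nat) :
  (forall x, (g x <= g' x)%nat) -> covered v w k g -> covered v w k g'.
Proof. intros Hg [i [Hi1 Hi2]]. exists i. split; auto. specialize (Hg (v ++ firstn i w)). lia. Qed.

Lemma crossed_determined (v w : list nat) :
  In w (words d M) -> determined_by (crossed v w) (subtree d v M).
Proof.
  intros Hw. apply determined_by_of_imp. intros g1 g2 Hg HY k Hk.
  destruct (HY k Hk) as [i [Hi1 Hi2]]. exists i. split; auto.
  rewrite <- Hg; auto. apply in_subtree_prefix; auto. lia.
Qed.

Lemma alive_determined (m : nat) (v : list nat) : determined_by (alive v m) (subtree d v (m * M)).
Proof.
  revert v. induction m as [|m IH]; intros v g1 g2 Hg; simpl; [tauto|].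
  assert (Hblock : forall w, In w (words d M) ->
            (crossed v w g1 <-> crossed v w g2) /\ (alive (v ++ w) m g1 <-> alive (v ++ w) m g2)).
  { intros w Hw. split.
    - apply crossed_determined; auto. intros x Hx. apply Hg, (subtree_incl d v M); auto. lia.
    - apply IH. intros x Hx. apply Hg, (in_subtree_of_block d v w M (m * M)); auto. }
  split; intros [w [Hw Hcw]]; exists w; specialize (Hblock w Hw); tauto.
Qed.

Lemma indic_not_alive_succ (m : nat) (v : list nat) (g : list nat -> nat) :
  indic (~ alive v (S m) g)
  = prodR (map (fun w => 1 - indic (crossed v w g) * indic (alive (v ++ w) m g)) (words d M)).
Proof.
  rewrite (indic_iff _ (forall w, In w (words d M) -> ~ (crossed v w g /\ alive (v ++ w) m g))).
  - rewrite indic_forall_in. f_equal. apply map_ext. intros w. rewrite indic_not, indic_and. reflexivity.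
  - simpl. split.
    + intros H w Hw HYA. apply H. exists w. tauto.
    + intros H [w [Hw HYA]]. apply (H w Hw HYA).
Qed.

Lemma alive_pred (m : nat) (v : list nat) (g : list nat -> nat) : alive v (S m) g -> alive v m g.
Proof.
  revert v. induction m as [|m IH]; intros v H; simpl; auto.
  destruct H as [w [Hw [HY HA]]]. exists w. auto.
Qed.

Lemma reached_valid (g : list nat -> nat) (u : list nat) : reached d g u -> valid d u.
Proof. induction 1; auto. constructor. Qed.

Lemma prefix_trans (a b c : list nat) : prefix a b -> prefix b c -> prefix a c.
Proof. intros [x ->] [y ->]. exists (x ++ y). rewrite app_assoc; auto. Qed.

Lemma reached_ext (g g' : list nat -> nat) (u : list nat) :
  reached d g u -> (forall x, prefix x u -> g x = g' x) -> reached d g' u.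
Proof.
  induction 1 as [|x v Hx IH Hv Hp Hl]; intros Hg; [constructor|].
  apply reached_step with x; auto.
  - apply IH. intros y Hy. apply Hg. eapply prefix_trans; eauto.
  - rewrite <- Hg; auto.
Qed.

Lemma reached_determined (u : list nat) :
  determined_by (fun g => reached d g u) (map (fun i => firstn i u) (seq 0 (S (length u)))).
Proof.
  apply determined_by_of_imp. intros g1 g2 Hg Hr. apply (reached_ext g1); auto.
  intros x [y ->]. apply Hg, in_map_iff. exists (length x). split.
  - rewrite firstn_app, Nat.sub_diag, firstn_all. simpl. apply app_nil_r.
  - apply in_seq. rewrite length_app. lia.
Qed.

Lemma crossed_reached (g : list nat -> nat) (v w : list nat) :
  reached d g v -> In w (words d M) -> crossed v w (fun x => Nat.min (g x) M) -> reached d g (v ++ w).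
Proof.
  intros Hr Hw HY. apply in_words in Hw. destruct Hw as [Hlw Hvw].
  assert (Hv := reached_valid _ _ Hr).
  assert (H : forall k, (k <= M)%nat -> forall k', (k' <= k)%nat -> reached d g (v ++ firstn k' w)).
  { induction k as [|k IH]; intros Hk k' Hk'.
    - replace k' with 0%nat by lia. rewrite app_nil_r. auto.
    - destruct (Nat.eq_dec k' (S k)) as [->|Hne]; [|apply IH; lia].
      destruct (HY k ltac:(lia)) as [i [Hi1 Hi2]].
      apply reached_step with (v ++ firstn i w).
      + apply IH; lia.
      + apply valid_app, valid_firstn; auto.
      + exists (skipn i (firstn (S k) w)). rewrite <- app_assoc. f_equal.
        rewrite <- (firstn_skipn i (firstn (S k) w)) at 1. f_equal.
        rewrite firstn_firstn. f_equal. lia.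
      + rewrite !length_app, !length_firstn. lia. }
  rewrite <- (firstn_all w), Hlw. apply (H M); auto.
Qed.

Lemma alive_reached (g : list nat -> nat) (m : nat) (v : list nat) :
  reached d g v -> alive v m (fun x => Nat.min (g x) M) ->
  exists u, reached d g u /\ (length v + m * M <= length u)%nat.
Proof.
  revert v. induction m as [|m IH]; intros v Hr Ha.
  - exists v. split; auto. lia.
  - destruct Ha as [w [Hw [HY HA]]].
    destruct (IH (v ++ w) (crossed_reached g v w Hr Hw HY) HA) as [u [Hu Hl]].
    exists u. split; auto. apply in_words in Hw. destruct Hw as [Hlw _]. rewrite length_app in Hl. simpl. lia.
Qed.

End Blocks.

Definition positive_path (N : nat) (g : list nat -> nat) : Prop :=
  forall i, In i (seq 0 N) -> (1 <= g (repeat 0%nat i))%nat.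

Lemma valid_repeat_zero (d k : nat) : (1 <= d)%nat -> valid d (repeat 0%nat k).
Proof. intros Hd. apply Forall_forall. intros x Hx. apply repeat_spec in Hx. lia. Qed.

Definition zero_path (N : nat) : list (list nat) := map (fun i => repeat 0%nat i) (seq 0 N).

Lemma NoDup_zero_path (N : nat) : NoDup (zero_path N).
Proof.
  apply NoDup_map_NoDup_ForallPairs; [|apply seq_NoDup]. intros a b _ _ E.
  rewrite <- (repeat_length 0%nat a), E. apply repeat_length.
Qed.

Lemma zero_path_valid (d N : nat) : (1 <= d)%nat -> Forall (valid d) (zero_path N).
Proof.
  intros Hd. apply Forall_forall. intros y Hy. apply in_map_iff in Hy. destruct Hy as [i [<- _]].
  apply valid_repeat_zero, Hd.
Qed.

Lemma positive_path_determined (N : nat) : determined_by (positive_path N) (zero_path N).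
Proof.
  apply determined_by_of_imp. intros g1 g2 Hg H i Hi. rewrite <- Hg; auto. apply in_map; auto.
Qed.

Lemma zero_path_disjoint_subtree (d N K : nat) (y : list nat) :
  In y (zero_path N) -> ~ In y (subtree d (repeat 0%nat N) K).
Proof.
  intros Hy Hy2. apply in_map_iff in Hy. destruct Hy as [i [<- Hi]]. apply in_seq in Hi.
  apply in_subtree in Hy2. destruct Hy2 as [z [E _]].
  assert (Hl : length (repeat 0%nat i) = length (repeat 0%nat N ++ z)) by (rewrite E; auto).
  rewrite length_app, !repeat_length in Hl. lia.
Qed.

Lemma reached_positive_path (d N : nat) (g : list nat -> nat) : (1 <= d)%nat ->
  positive_path N g -> reached d g (repeat 0%nat N).
Proof.
  intros Hd. induction N as [|N IH]; intros Hpath; [constructor|].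
  apply reached_step with (repeat 0%nat N).
  - apply IH. intros i Hi. apply Hpath. apply in_seq in Hi. apply in_seq. lia.
  - apply valid_repeat_zero, Hd.
  - exists [0%nat]. rewrite <- repeat_cons. reflexivity.
  - rewrite !repeat_length. specialize (Hpath N ltac:(apply in_seq; lia)). lia.
Qed.

Definition max_length (l : list (list nat)) : nat :=
  fold_right (fun x acc => Nat.max (length x) acc) 0%nat l.

Lemma max_length_ge (l : list (list nat)) (x : list nat) : In x l -> (length x <= max_length l)%nat.
Proof. induction l; simpl; [tauto|]. intros [<-|H]; [lia|]. specialize (IHl H). lia. Qed.

Lemma infinite_set_of_unbounded (Sv : list nat -> Prop) :
  (forall L, exists u, Sv u /\ (L <= length u)%nat) -> infinite_set Sv.
Proof.
  intros H l. destruct (H (S (max_length l))) as [u [Hu HL]]. exists u. split; auto.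
  intros Hin. apply max_length_ge in Hin. lia.
Qed.

Lemma infinite_set_iff (d : nat) (Sv : list nat -> Prop) : (forall u, Sv u -> valid d u) ->
  (infinite_set Sv <-> forall L, exists L', (L <= L')%nat /\ exists u, In u (words d L') /\ Sv u).
Proof.
  intros HS. split.
  - intros Hinf L. destruct (Hinf (short_words d (S L))) as [u [Hu Hn]]. exists (length u).
    split; [|exists u; split; [apply in_words; split; auto | auto]].
    destruct (Nat.lt_ge_cases L (length u)); [lia|]. exfalso. apply Hn, in_short_words. split; auto. lia.
  - intros H. apply infinite_set_of_unbounded. intros L. destruct (H L) as [L' [HL [u [Hu Hs]]]].
    exists u. apply in_words in Hu. split; auto. lia.
Qed.

Section ConePercolation.
Context {Omega : Type} (F : (Omega -> Prop) -> Prop) (P : (Omega -> Prop) -> R)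
  (hP : is_prob_space F P) (d : nat) (Rb : list nat -> Omega -> nat)
  (hRb_rv : forall u, valid d u -> nat_rv F (Rb u))
  (hRb_ind : independent P (valid d) Rb)
  (R_ : nat -> Omega -> nat) (hR_rv : forall z, nat_rv F (R_ z))
  (hRb_law : forall u k, valid d u -> P (fun w => Rb u w = k) = P (fun w => R_ (length u) w = k))
  (M : nat).

Local Notation tr := (trunc Rb M).
Local Notation wt := (weight P d Rb M).
Local Notation E := (Ex vertex_eq_dec M wt).
Local Notation P_eq_Ex := (P_eq_Ex F P hP d Rb hRb_rv hRb_ind M).
Local Notation wt_nonneg := (weight_nonneg F P hP d Rb hRb_rv M).
Local Notation wt_sum := (weight_sum F P hP d Rb hRb_rv M).

Lemma P_lt_law (u : list nat) (m : nat) : valid d u ->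
  P (fun w => (Rb u w < m)%nat) = P (fun w => (R_ (length u) w < m)%nat).
Proof.
  intros Hu.
  assert (Hsplit : forall X : Omega -> nat,
            P (fun w => (X w < m)%nat) = P (fun w => exists i, (i < m)%nat /\ X w = i))
    by (intros X; apply P_ext; intro w; split; [exists (X w); auto | intros [i [H1 H2]]; lia]).
  rewrite !Hsplit, !(P_disjoint_union F P hP).
  - apply sumR_map_ext. intros; apply hRb_law; auto.
  - intros; apply hR_rv.
  - intros i j _ _ Hij w H1 H2; congruence.
  - intros; apply hRb_rv; auto.
  - intros i j _ _ Hij w H1 H2; congruence.
Qed.

Lemma P_forall_independent (l : list nat) (x : nat -> list nat) (Q : nat -> nat -> Prop) :
  NoDup (map x l) -> (forall i, In i l -> valid d (x i)) ->
  P (fun w => forall i, In i l -> Q i (tr w (x i)))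
  = prodR (map (fun i => P (fun w => Q i (tr w (x i)))) l).
Proof.
  intros HN Hv.
  pose proof (NoDup_map_injective x l HN) as Hinj.
  set (h0 := fun _ : list nat => 0%nat).
  assert (HV : Forall (valid d) (map x l)).
  { apply Forall_forall. intros y Hy. apply in_map_iff in Hy. destruct Hy as [i [<- Hi]]. auto. }
  assert (Hsingle : forall i, In i l ->
            P (fun w => Q i (tr w (x i))) = E [x i] (fun g => indic (Q i (g (x i)))) h0).
  { intros i Hi. apply (P_eq_Ex [x i] (fun g => Q i (g (x i)))).
    - constructor; [simpl; tauto | constructor].
    - constructor; auto.
    - apply determined_by_of_imp. intros g1 g2 Hg. rewrite Hg; simpl; auto. }
  rewrite (P_eq_Ex (map x l) (fun g => forall i, In i l -> Q i (g (x i))) h0 HN HV).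
  - rewrite (Ex_ext _ _ _ _ _ (fun g => prodR (map (fun i => indic (Q i (g (x i)))) l)))
      by (intros; apply indic_forall_in).
    rewrite <- concat_map_singleton, Ex_prodR_disjoint.
    + f_equal. apply map_ext_in. intros i Hi. symmetry. apply Hsingle, Hi.
    + eapply NoDup_map_inv; eauto.
    + intros i1 i2 H1 H2 Hne y [<-|[]] [Heq|[]]. apply Hne, Hinj; auto.
    + intros i1 i2 H1 H2 Hne g y a [<-|[]]. rewrite upd_neq; [reflexivity|].
      intro Heq. apply Hne, Hinj; auto.
  - apply determined_by_of_imp. intros g1 g2 Hg H i Hi. rewrite <- Hg by (apply in_map; auto).
    auto.
Qed.

Definition crossing_bound (j : nat) : R :=
  prodR (map (fun k =>
     1 - prodR (map (fun i => P (fun w => (R_ (j * M + i)%nat w < S k - i)%nat)) (seq 0 (S k))))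
   (seq 0 M)).

Section BlockPath.
Variables (v w : list nat) (j : nat).
Hypotheses (Hv : valid d v) (Hlv : length v = (j * M)%nat) (Hw : In w (words d M)).

Let x (i : nat) : list nat := v ++ firstn i w.

Lemma length_block_vertex (i : nat) : (i <= M)%nat -> length (x i) = (j * M + i)%nat.
Proof. intros Hi. apply in_words in Hw. unfold x. rewrite length_app, length_firstn. lia. Qed.

Lemma valid_block_vertex (i : nat) : valid d (x i).
Proof. apply in_words in Hw. apply valid_app, valid_firstn; tauto. Qed.

Lemma NoDup_block_vertices (K : nat) : (K <= S M)%nat -> NoDup (map x (seq 0 K)).
Proof.
  intros HK. apply NoDup_map_NoDup_ForallPairs; [|apply seq_NoDup]. intros a b Ha Hb E.
  apply in_seq in Ha, Hb.
  assert (length (x a) = length (x b)) by (rewrite E; auto).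
  rewrite !length_block_vertex in H by lia. lia.
Qed.

Lemma P_not_covered (k : nat) : (k < M)%nat ->
  P (fun om => ~ covered v w k (tr om))
  = prodR (map (fun i => P (fun om => (R_ (j * M + i)%nat om < S k - i)%nat)) (seq 0 (S k))).
Proof.
  intros Hk.
  rewrite (P_ext P _ (fun om => forall i, In i (seq 0 (S k)) -> (tr om (x i) < S k - i)%nat)).
  - rewrite (P_forall_independent _ x (fun i a => (a < S k - i)%nat));
      [| apply NoDup_block_vertices; lia | intros; apply valid_block_vertex].
    f_equal. apply map_ext_in. intros i Hi. apply in_seq in Hi.
    rewrite <- length_block_vertex, <- P_lt_law by (lia || apply valid_block_vertex).
    apply P_ext. intro om. unfold trunc. lia.
  - intro om. unfold covered. split.
    + intros H i Hi. apply in_seq in Hi.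
      destruct (Nat.lt_ge_cases (tr om (x i)) (S k - i)); auto.
      exfalso. apply H. exists i. split; [lia | auto].
    + intros H [i [Hi1 Hi2]]. specialize (H i ltac:(apply in_seq; lia)). unfold x in H. lia.
Qed.

Lemma P_crossed_ge : crossing_bound j <= P (fun om => crossed M v w (tr om)).
Proof.
  set (Vp := map x (seq 0 M)). set (h0 := fun _ : list nat => 0%nat).
  assert (HNp : NoDup Vp) by (apply NoDup_block_vertices; lia).
  assert (HVp : Forall (valid d) Vp).
  { apply Forall_forall. intros y Hy. apply in_map_iff in Hy. destruct Hy as [i [<- _]].
    apply valid_block_vertex. }
  assert (Hdet : forall k, (k < M)%nat -> determined_by (covered v w k) Vp).
  { intros k Hk. apply determined_by_of_imp. intros g1 g2 Hg [i [Hi1 Hi2]]. exists i. split; auto.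
    rewrite <- Hg; auto. apply (in_map x), in_seq. lia. }
  assert (HdetC : determined_by (crossed M v w) Vp).
  { apply determined_by_of_imp. intros g1 g2 Hg H k Hk. apply (Hdet k Hk g1 g2 Hg), H, Hk. }
  rewrite (P_eq_Ex Vp (crossed M v w) h0 HNp HVp HdetC).
  rewrite (Ex_ext _ _ _ _ _ (fun g => prodR (map (fun k => indic (covered v w k g)) (seq 0 M)))).
  2:{ intros g. rewrite <- indic_forall_in. apply indic_iff. unfold crossed.
      split; intros H k Hk; apply H; [apply in_seq in Hk; lia | apply in_seq; lia]. }
  eapply Rle_trans;
    [|apply (Harris_prodR vertex_eq_dec M wt wt_nonneg wt_sum Vp (seq 0 M)
               (fun k g => indic (covered v w k g)) h0 HNp)].
  - unfold crossing_bound. apply Req_le. f_equal. apply map_ext_in. intros k Hk. apply in_seq in Hk.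
    rewrite <- (P_eq_Ex Vp (covered v w k) h0 HNp HVp (Hdet k ltac:(lia))).
    rewrite <- P_not_covered, (P_compl F P hP); [ring | | lia].
    apply (F_determined F P hP d Rb hRb_rv M Vp); auto. apply Hdet. lia.
  - intros; apply indic_bounds.
  - intros k _. apply increasing_indic. intros g g' Hg. apply covered_mono, Hg.
Qed.

End BlockPath.

Lemma Ex_not_alive_succ_le (v : list nat) (m : nat) (eps : R) (b : list nat -> nat) :
  valid d v -> 0 <= eps <= 1 ->
  (forall w, In w (words d M) -> eps <= P (fun om => alive d M (v ++ w) m (tr om))) ->
  E (block_subtrees d v M (m * M)) (fun g => indic (~ alive d M v (S m) g)) b
  <= prodR (map (fun w => 1 - eps * indic (crossed M v w b)) (words d M)).
Proof.
  intros Hv Heps Hsub.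
  assert (Hvw : forall w, In w (words d M) -> valid d (v ++ w))
    by (intros w Hw; apply in_words in Hw; apply valid_app; tauto).
  assert (Hcr : forall w1 w2, In w1 (words d M) -> In w2 (words d M) ->
            ignores vertex_eq_dec (fun g => indic (crossed M v w1 g)) (subtree d (v ++ w2) (m * M))).
  { intros w1 w2 H1 H2. apply (ignores_indic _ _ (subtree d v M)); [apply crossed_determined; auto|].
    intros y Hy. apply (subtree_block_disjoint_top d v w2 M (m * M)); auto. }
  rewrite (Ex_ext _ _ _ _ _ _ _ (fun g => indic_not_alive_succ d M m v g)).
  unfold block_subtrees. rewrite Ex_prodR_disjoint.
  - apply prodR_map_le. intros w Hw. split.
    + apply (Ex_nonneg _ _ _ wt_nonneg wt_sum). intros g.
      pose proof (indic_bounds (crossed M v w g)). pose proof (indic_bounds (alive d M (v ++ w) m g)).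
      nra.
    + rewrite (Ex_ext _ _ _ _ _
                (fun g => 1 + (-1) * (indic (crossed M v w g) * indic (alive d M (v ++ w) m g))))
        by (intros; ring).
      rewrite Ex_plus, (Ex_const _ _ _ wt_sum), Ex_scal, Ex_ignores_mul by (apply Hcr; auto).
      rewrite <- (P_eq_Ex (subtree d (v ++ w) (m * M)) (alive d M (v ++ w) m) b).
      * specialize (Hsub w Hw). pose proof (indic_bounds (crossed M v w b)). nra.
      * apply NoDup_subtree.
      * apply subtree_valid, Hvw, Hw.
      * apply alive_determined.
  - apply NoDup_words.
  - intros w1 w2 H1 H2 Hne y. apply (subtree_blocks_disjoint d v w1 w2 M); auto.
  - intros w1 w2 H1 H2 Hne g y a Hy. cbn beta.
    rewrite (Hcr w1 w2 H1 H2 g y a Hy). f_equal. f_equal.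
    refine (ignores_indic vertex_eq_dec _ _ _ (alive_determined d M m (v ++ w1)) _ g y a Hy).
    intros z Hz. apply (subtree_blocks_disjoint d v w2 w1 M (m * M)); auto.
Qed.

Lemma Ex_crossed_count_ge (v : list nat) (j : nat) (h : list nat -> nat) :
  valid d v -> length v = (j * M)%nat ->
  INR (d ^ M) * crossing_bound j
  <= E (subtree d v M) (fun b => sumR (map (fun w => indic (crossed M v w b)) (words d M))) h.
Proof.
  intros Hv Hlv. rewrite (Ex_sum _ _ _ wt_sum), <- length_words, <- sumR_map_const.
  apply sumR_map_le. intros w Hw.
  rewrite <- (P_eq_Ex (subtree d v M) (crossed M v w));
    [apply P_crossed_ge; auto | apply NoDup_subtree | apply subtree_valid; auto |
     apply crossed_determined; auto].
Qed.

(** Induction on [m]: given the radii in the first block below [v], the subtrees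
    below its [d ^ M] block paths are independent, whence
    [P (~ alive) <= 1 - eps c + eps^2 d^(2M) <= 1 - eps]. *)
Lemma P_alive_ge (c eps : R) (J : nat) :
  0 < eps <= 1 -> eps * (INR (d ^ M) * INR (d ^ M)) <= c - 1 ->
  (forall j, (J <= j)%nat -> c <= INR (d ^ M) * crossing_bound j) ->
  forall m v j, valid d v -> length v = (j * M)%nat -> (J <= j)%nat ->
  eps <= P (fun om => alive d M v m (tr om)).
Proof.
  intros Heps Hec Hcone m. induction m as [|m IH]; intros v j Hv Hlv HJ.
  - simpl. rewrite (ps_total _ _ hP). lra.
  - set (D := INR (d ^ M)) in *. set (h0 := fun _ : list nat => 0%nat).
    set (Vs := subtree d v M ++ block_subtrees d v M (m * M)).
    set (T := fun b => sumR (map (fun w => indic (crossed M v w b)) (words d M))).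
    assert (Hpoint : forall b, E (block_subtrees d v M (m * M)) (fun g => indic (~ alive d M v (S m) g)) b
                               <= 1 + eps * eps * (D * D) + (- eps) * T b).
    { intros b. eapply Rle_trans; [apply (Ex_not_alive_succ_le v m eps b Hv); [lra|]|].
      - intros w Hw. apply in_words in Hw. destruct Hw as [Hlw Hvw].
        apply (IH _ (S j)); [apply valid_app; auto | rewrite length_app; simpl; lia | lia].
      - unfold D. rewrite <- (length_words d M).
        eapply Rle_trans; [apply prodR_one_minus_indic_le; lra | unfold T; lra]. }
    assert (Hdet : determined_by (alive d M v (S m)) Vs)
      by (eapply determined_by_incl; [apply alive_determined | apply subtree_incl_blocks]).
    assert (HVs : Forall (valid d) Vs)
      by (apply Forall_app; split; [apply subtree_valid | apply block_subtrees_valid]; auto).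
    assert (Hnot : P (fun om => ~ alive d M v (S m) (tr om)) <= 1 + eps * eps * (D * D) + (- eps) * c).
    { rewrite (P_eq_Ex Vs (fun g => ~ alive d M v (S m) g) h0).
      - unfold Vs. rewrite Ex_app. eapply Rle_trans; [apply (Ex_mono _ _ _ wt_nonneg); exact Hpoint|].
        rewrite Ex_plus, (Ex_const _ _ _ wt_sum), Ex_scal.
        pose proof (Ex_crossed_count_ge v j h0 Hv Hlv) as Hmean. fold D T in Hmean.
        specialize (Hcone j HJ). nra.
      - apply NoDup_subtree_blocks.
      - exact HVs.
      - intros g1 g2 Hg. specialize (Hdet g1 g2 Hg). tauto. }
    rewrite (P_compl F P hP) in Hnot by exact (F_determined F P hP d Rb hRb_rv M _ _ HVs Hdet).
    assert (eps * (eps * (D * D)) <= eps * (c - 1)) by (apply Rmult_le_compat_l; lra).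
    nra.
Qed.

Lemma P_positive_path_pos (N : nat) : (1 <= d)%nat -> (1 <= M)%nat ->
  (forall z, P (fun w => R_ z w = 0%nat) < 1) -> 0 < P (fun om => positive_path N (tr om)).
Proof.
  intros Hd HM HR. unfold positive_path.
  rewrite (P_forall_independent _ (fun i => repeat 0%nat i) (fun _ a => (1 <= a)%nat)).
  - apply prodR_map_pos. intros i _.
    rewrite (P_ext P _ (fun om => ~ Rb (repeat 0%nat i) om = 0%nat)) by (intro om; unfold trunc; lia).
    assert (Hvi : valid d (repeat 0%nat i)) by (apply valid_repeat_zero, Hd).
    rewrite (P_compl F P hP), hRb_law by (auto || apply (hRb_rv _ Hvi)).
    specialize (HR (length (repeat 0%nat i))). lra.
  - apply NoDup_zero_path.
  - intros; apply valid_repeat_zero; auto.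
Qed.

Lemma F_reached (u : list nat) : F (fun om => reached d (fun x => Rb x om) u).
Proof.
  destruct (classic (valid d u)) as [Hu|Hu].
  - refine (F_determined_radii F P hP d Rb hRb_rv _ _ _ (reached_determined d u)).
    apply Forall_forall. intros y Hy. apply in_map_iff in Hy. destruct Hy as [i [<- _]].
    apply valid_firstn, Hu.
  - apply (F_ext _ (fun _ => False)); [|apply (F_empty F P hP)].
    intro om. split; [tauto|]. intros Hr. apply Hu. eapply reached_valid; eauto.
Qed.

Lemma F_infinite_cluster : F (fun om => infinite_set (reached d (fun u => Rb u om))).
Proof.
  apply (F_ext F (fun om => forall L, exists L', (L <= L')%nat /\
                  exists u, In u (words d L') /\ reached d (fun u => Rb u om) u)).
  - intro om. symmetry. apply (infinite_set_iff d). intros; eapply reached_valid; eauto.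
  - apply (F_forall F P hP). intro L. apply (F_exists F P hP). intro L'.
    apply (F_and F P hP); [apply (F_const F P hP)|].
    apply (F_exists_in F P hP). intros u _. apply F_reached.
Qed.

Lemma infinite_of_path_alive (N : nat) (om : Omega) : (1 <= d)%nat -> (1 <= M)%nat ->
  positive_path N (tr om) -> (forall m, alive d M (repeat 0%nat N) m (tr om)) ->
  infinite_set (reached d (fun u => Rb u om)).
Proof.
  intros Hd HM Hpath Halive. apply infinite_set_of_unbounded. intros L.
  assert (Hr : reached d (fun u => Rb u om) (repeat 0%nat N)).
  { apply reached_positive_path; auto. intros i Hi. specialize (Hpath i Hi). unfold trunc in Hpath. lia. }
  destruct (alive_reached d M _ L _ Hr (Halive L)) as [u [Hu Hlu]].
  exists u. split; auto. nia.
Qed.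

Lemma P_path_and_alive_ge (c eps : R) (J m : nat) :
  (1 <= d)%nat -> 0 < eps <= 1 -> eps * (INR (d ^ M) * INR (d ^ M)) <= c - 1 ->
  (forall j, (J <= j)%nat -> c <= INR (d ^ M) * crossing_bound j) ->
  P (fun om => positive_path (J * M) (tr om)) * eps
  <= P (fun om => positive_path (J * M) (tr om) /\ alive d M (repeat 0%nat (J * M)) m (tr om)).
Proof.
  intros Hd Heps Hec Hcone.
  assert (Hv0 : valid d (repeat 0%nat (J * M))) by (apply valid_repeat_zero, Hd).
  rewrite (P_and_independent F P hP d Rb hRb_rv hRb_ind M (zero_path (J * M))
             (subtree d (repeat 0%nat (J * M)) (m * M)));
    auto using NoDup_zero_path, zero_path_valid, positive_path_determined, NoDup_subtree,
      subtree_valid, alive_determined, zero_path_disjoint_subtree.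
  apply Rmult_le_compat_l.
  - apply (P_nonneg F P hP), (F_determined F P hP d Rb hRb_rv M (zero_path (J * M)));
      auto using zero_path_valid, positive_path_determined.
  - apply (P_alive_ge c eps J Heps Hec Hcone m _ J); auto using repeat_length.
Qed.

Theorem P_infinite_cluster_pos (c : R) (J : nat) :
  (1 <= d)%nat -> (1 <= M)%nat -> 1 < c -> (forall z, P (fun w => R_ z w = 0%nat) < 1) ->
  (forall j, (J <= j)%nat -> c <= INR (d ^ M) * crossing_bound j) ->
  0 < P (fun om => infinite_set (reached d (fun u => Rb u om))).
Proof.
  intros Hd HM Hc HR Hcone.
  destruct (small_eps_exists c (INR (d ^ M) * INR (d ^ M)) Hc) as [eps [Heps Hec]];
    [apply Rmult_le_pos; apply pos_INR|].
  set (A := fun m om => positive_path (J * M) (tr om) /\ alive d M (repeat 0%nat (J * M)) m (tr om)).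
  assert (HFA : forall m, F (A m)).
  { intros m. apply (F_determined F P hP d Rb hRb_rv M
      (zero_path (J * M) ++ subtree d (repeat 0%nat (J * M)) (m * M))
      (fun g => positive_path (J * M) g /\ alive d M (repeat 0%nat (J * M)) m g)).
    - apply Forall_app. split; [apply zero_path_valid | apply subtree_valid, valid_repeat_zero]; auto.
    - apply determined_by_and; [apply positive_path_determined | apply alive_determined]. }
  apply Rlt_le_trans with (P (fun om => positive_path (J * M) (tr om)) * eps);
    [apply Rmult_lt_0_compat; [apply P_positive_path_pos | apply Heps]; auto|].
  apply Rle_trans with (P (fun om => forall m, A m om)).
  - apply (P_decreasing_inter_ge F P hP); auto.
    + intros m om [H1 H2]. split; auto. apply alive_pred; auto.
    + intros m. apply (P_path_and_alive_ge c); auto.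
  - apply (P_mono F P hP); [apply (F_forall F P hP); auto | apply F_infinite_cluster|].
    intros om Hall. apply (infinite_of_path_alive (J * M) om); auto; [apply (Hall 0%nat)|].
    intros m. apply Hall.
Qed.

End ConePercolation.

Theorem theorem4 (d : nat) (hd : (2 <= d)%nat)
  (Omega : Type) (F : (Omega -> Prop) -> Prop) (P : (Omega -> Prop) -> R)
  (hP : is_prob_space F P)
  (R_ : nat -> Omega -> nat)
  (hR_rv : forall z, nat_rv F (R_ z))
  (hR_ind : independent P (fun _ => True) R_)
  (hR_nz : forall z, P (fun w => R_ z w = 0%nat) < 1)
  (Rb : list nat -> Omega -> nat)
  (hRb_rv : forall u, valid d u -> nat_rv F (Rb u))
  (hRb_ind : independent P (valid d) Rb)
  (hRb_law : forall u k, valid d u ->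
     P (fun w => Rb u w = k) = P (fun w => R_ (length u) w = k))
  (n : nat) (hn : (1 <= n)%nat)
  (hliminf : exists c, 1 < c /\ exists J, forall j, (J <= j)%nat ->
               c <= cone_quantity P R_ d n j) :
  F (fun w => infinite_set (reached d (fun u => Rb u w))) /\
  0 < P (fun w => infinite_set (reached d (fun u => Rb u w))).
Proof.
  destruct hliminf as [c [Hc [J HJ]]].
  split; [exact (F_infinite_cluster F P hP d Rb hRb_rv)|].
  apply (P_infinite_cluster_pos F P hP d Rb hRb_rv hRb_ind R_ hR_rv hRb_law n c J);
    auto; try lia.
  intros j Hj. rewrite pow_INR. exact (HJ j Hj).
Qed.
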